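(* Let $\tau_0>0$, $R>0$, $x_0\in\mathbb{H}^3$. For $\mu=1,2,3$ let $f^\mu\in C^2(\mathbb{H}^3)$, $g^\mu\in C^1(\mathbb{H}^3)$ with supports contained in the geodesic ball $B_R(x_0)$. For $\tau>\tau_0$ and $x\in\mathbb{H}^3$ define $$A^\mu(\tau,x)=\partial_\tau\big(\sinh(\tau-\tau_0)M_{f^\mu}(\tau-\tau_0,x)\big)+\sinh(\tau-\tau_0)M_{g^\mu}(\tau-\tau_0,x),$$ equivalently $$A^\mu(\tau,x)=\frac{1}{4\pi\sinh^2(\tau-\tau_0)}\int_{S_{\tau-\tau_0}(x)}\Big(\sinh(\tau-\tau_0)g^\mu(y)+\cosh(\tau-\tau_0)f^\mu(y)+\sinh(\tau-\tau_0)\,\partial_{\nu}f^\mu(y)\Big)dS(y),$$ where $\partial_\nu$ is the radial derivative along the geodesic sphere. Then $A^\mu$ decays at rate $\mathcal{O}(e^{-\tau})$: there exist $C,T>0$ such that $|A^\mu(\tau,x)|\le Ce^{-\tau}$ for all $\tau\ge T$ and all $x\in\mathbb{H}^3$. (Consequently, in the time variable $t=\sinh\tau-\tau$ the decay rate is $\mathcal{O}(t^{-1})$.)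
   Context: $\mathbb{H}^3$ is hyperbolic 3-space, modeled as the upper half-space $\{(x,y,z):z>0\}$ with metric $(dx^2+dy^2+dz^2)/z^2$. This arises from the Coulomb-gauge electromagnetic wave equation $\partial_\tau^2A^\mu-\Delta_\sigma A^\mu=0$ ($\Delta_\sigma$ the Laplace–Beltrami operator of $\mathbb{H}^3$) on the hyperbolic ($K=-1$) Friedmann–Robertson–Walker space-time $ds^2=a^2(\tau)(-d\tau^2+(dx^2+dy^2+dz^2)/z^2)$, $a(\tau)=\cosh\tau-1$, $t=\sinh\tau-\tau$, with data $(f^\mu,g^\mu)$ at $\tau_0$. $S_r(x)$ is the geodesic sphere of radius $r$ centered at $x$, $dS$ its hyperbolic surface measure (total area $4\pi\sinh^2 r$), $B_R(x_0)$ the closed geodesic ball, and the geodesic spherical mean is $M_h(r,x)=\frac{1}{4\pi\sinh^2 r}\int_{S_r(x)}h(y)\,dS(y)$. *)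

From Stdlib Require Import Reals Lra ClassicalEpsilon.
Open Scope R_scope.

Definition epsilon_inh {A : Type} (H : inhabited A) : A :=
  epsilon H (fun _ => True).

(* Points of R^3; H^3 = upper half-space {z > 0}. *)
Definition pt : Type := (R * R * R)%type.
Definition px (p : pt) : R := fst (fst p).
Definition py (p : pt) : R := snd (fst p).
Definition pz (p : pt) : R := snd p.
Definition inH3 (p : pt) : Prop := 0 < pz p.

Definition edist2 (p q : pt) : R :=
  (px p - px q) ^ 2 + (py p - py q) ^ 2 + (pz p - pz q) ^ 2.

(* hyperbolic distance: arcosh (1 + |p-q|^2 / (2 z_p z_q)), arcosh u = ln (u + sqrt (u^2-1)) *)
Definition hdist (p q : pt) : R :=
  let u := 1 + edist2 p q / (2 * pz p * pz q) in ln (u + sqrt (u * u - 1)).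

(* Riemann integral, with value 0 when not integrable *)
Definition RInt (f : R -> R) (a b : R) : R :=
  match excluded_middle_informative (inhabited (Riemann_integrable f a b)) with
  | left H => RiemannInt (epsilon_inh H)
  | right _ => 0
  end.

(* The geodesic sphere S_r(x) in the half-space model is the Euclidean sphere
   with centre (x1, x2, z cosh r) and radius z sinh r; parametrised by
   (th, ph) in [0,pi] x [0,2pi]. *)
Definition sphere_pt (x : pt) (r th ph : R) : pt :=
  (px x + pz x * sinh r * sin th * cos ph,
   py x + pz x * sinh r * sin th * sin ph,
   pz x * cosh r + pz x * sinh r * cos th).

(* hyperbolic surface measure dS = (Euclidean area element) / y_z^2 in these coordinates *)
Definition sphere_density (r th : R) : R :=
  sinh r ^ 2 * sin th / (cosh r + sinh r * cos th) ^ 2.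

Definition sphere_integral (h : pt -> R) (x : pt) (r : R) : R :=
  RInt (fun th => RInt (fun ph => h (sphere_pt x r th ph) * sphere_density r th) 0 (2 * PI))
       0 PI.

Definition spherical_mean (h : pt -> R) (r : R) (x : pt) : R :=
  sphere_integral h x r / (4 * PI * sinh r ^ 2).

Definition cont_H3 (f : pt -> R) : Prop :=
  forall p, inH3 p -> forall eps, 0 < eps -> exists delta, 0 < delta /\
    forall q, inH3 q -> sqrt (edist2 p q) < delta -> Rabs (f q - f p) < eps.

Definition has_partials (f d1 d2 d3 : pt -> R) : Prop :=
  forall p, inH3 p ->
    derivable_pt_lim (fun t => f (t, py p, pz p)) (px p) (d1 p) /\
    derivable_pt_lim (fun t => f (px p, t, pz p)) (py p) (d2 p) /\
    derivable_pt_lim (fun t => f (px p, py p, t)) (pz p) (d3 p).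

Definition C1_H3 (f : pt -> R) : Prop :=
  exists d1 d2 d3, has_partials f d1 d2 d3 /\ cont_H3 d1 /\ cont_H3 d2 /\ cont_H3 d3.

Definition C2_H3 (f : pt -> R) : Prop :=
  exists d1 d2 d3, has_partials f d1 d2 d3 /\ C1_H3 d1 /\ C1_H3 d2 /\ C1_H3 d3.

Definition supp_in_ball (f : pt -> R) (x0 : pt) (Rad : R) : Prop :=
  forall y, inH3 y -> Rad < hdist x0 y -> f y = 0.

From Pilot Require Import Defs.
From Stdlib Require Import Reals.
Open Scope R_scope.
From Stdlib Require Import Lra Lia Psatz ClassicalEpsilon Classical_Prop FunctionalExtensionality.
From Coquelicot Require Import Coquelicot.

(* In geodesic polar
   coordinates about x the surface measure of S_r(x) is sinh^2 r sin a da dph, so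
   sinh r M_h(r,x) = sinh r P_h(r) / (4 pi), where P_h(r) integrates h(exp_x(r n(a,ph))) against
   sin a da dph, and d/dr P_f is obtained by differentiating under the integral.
   For y = exp_x(r n) one has cosh d(x0,y) = alpha - b.n with alpha^2 - |b|^2 >= cosh^2 r, so once
   cosh r >= 2 cosh R the directions n with y in B_R(x0) lie in a cap of solid angle
   O(cosh^2 R / cosh^2 r).  The integrands being bounded, P_f, P_g and d/dr P_f are
   O(1 / cosh^2 r), hence A = O(1 / cosh r) = O(e^-tau). *)

(** * Real-analysis preliminaries *)

Lemma Defs_RInt_eq (h : R -> R) a b : ex_RInt h a b -> Defs.RInt h a b = RInt h a b.
Proof.
  intros H. unfold Defs.RInt. destruct (excluded_middle_informative _) as [Hi|Hn].
  - rewrite (RInt_Reals h a b (epsilon_inh Hi)). reflexivity.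
  - exfalso; apply Hn; constructor; apply ex_RInt_Reals_0; exact H.
Qed.

Lemma RInt_eq0 (g : R -> R) a b :
  (forall x, Rmin a b < x < Rmax a b -> g x = 0) -> RInt g a b = 0.
Proof.
  intros H. rewrite (RInt_ext g (fun _ => 0)) by exact H.
  rewrite RInt_const. unfold scal; simpl; unfold mult; simpl; ring.
Qed.

Lemma ex_RInt_continuous_R (g : R -> R) a b :
  (forall t, Rmin a b <= t <= Rmax a b -> continuous g t) -> ex_RInt g a b.
Proof. intros; apply (ex_RInt_continuous (V := R_CompleteNormedModule)); auto. Qed.

Lemma RInt_Rmult_l (g : R -> R) (k A B : R) : ex_RInt g A B ->
  RInt (fun t => k * g t) A B = k * RInt g A B.
Proof.
  intros H. rewrite <- (RInt_scal (V := R_CompleteNormedModule)) by exact H.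
  apply RInt_ext. intros t _. reflexivity.
Qed.

Lemma RInt_Rmult_r (g : R -> R) (k A B : R) : ex_RInt g A B ->
  RInt (fun t => g t * k) A B = k * RInt g A B.
Proof.
  intros H. rewrite <- (RInt_scal (V := R_CompleteNormedModule)) by exact H.
  apply RInt_ext. intros t _. unfold scal; simpl; unfold mult; simpl; ring.
Qed.

Lemma abs_RInt_le_local_support (g : R -> R) A B t0 d M :
  A <= B -> 0 <= d ->
  (forall t, A <= t <= B -> continuous g t) ->
  (forall t, A <= t <= B -> Rabs (g t) <= M) ->
  (forall t, A <= t <= B -> d < Rabs (t - t0) -> g t = 0) ->
  Rabs (RInt g A B) <= 2 * d * M.
Proof.
  intros HAB Hd Hc Hb Hz.
  assert (HM : 0 <= M) by (specialize (Hb A); assert (h := Rabs_pos (g A)); lra).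
  set (p := Rmax A (Rmin B (t0 - d))).
  set (q := Rmax p (Rmin B (t0 + d))).
  assert (Hp : A <= p <= B) by (unfold p; unfold Rmax, Rmin; repeat destruct Rle_dec; lra).
  assert (Hq : p <= q <= B) by (unfold q; unfold Rmax, Rmin; repeat destruct Rle_dec; lra).
  assert (Hex : forall u v, A <= u -> u <= v -> v <= B -> ex_RInt g u v).
  { intros u v H1 H2 H3. apply ex_RInt_continuous_R. intros t Ht.
    rewrite Rmin_left in Ht by lra. rewrite Rmax_right in Ht by lra. apply Hc; lra. }
  rewrite <- (RInt_Chasles g A p B) by (apply Hex; lra).
  rewrite <- (RInt_Chasles g p q B) by (apply Hex; lra).
  rewrite (RInt_eq0 g A p).
  2:{ intros x Hx. rewrite Rmin_left in Hx by lra. rewrite Rmax_right in Hx by lra.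
      apply Hz; [lra|]. revert Hx. unfold p, Rmax, Rmin.
      repeat destruct Rle_dec; intros; rewrite Rabs_left; lra. }
  rewrite (RInt_eq0 g q B).
  2:{ intros x Hx. rewrite Rmin_left in Hx by lra. rewrite Rmax_right in Hx by lra.
      apply Hz; [lra|]. revert Hx. unfold q, p, Rmax, Rmin.
      repeat destruct Rle_dec; intros; rewrite Rabs_right; lra. }
  change (plus 0 (plus (RInt g p q) 0)) with (0 + (RInt g p q + 0)).
  rewrite Rplus_0_l, Rplus_0_r.
  eapply Rle_trans.
  - apply abs_RInt_le_const; [lra | apply Hex; lra |]. intros t Ht; apply Hb; lra.
  - assert (q - p <= 2 * d) by (unfold q, p; unfold Rmax, Rmin; repeat destruct Rle_dec; lra).
    nra.
Qed.

Lemma RInt_periodic_shift (h : R -> R) A :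
  (forall t, continuous h t) -> (forall t, h (t + 2 * PI) = h t) ->
  RInt h A (A + 2 * PI) = RInt h 0 (2 * PI).
Proof.
  intros Hc Hp.
  set (G := fun y => RInt h y (y + 2 * PI)).
  assert (HD : forall y, is_derive G y 0).
  { intros y. unfold G.
    replace 0 with (minus (scal 1 (h (y + 2 * PI))) (scal 1 (h y))).
    2:{ rewrite Hp. unfold minus, plus, opp, scal; simpl; unfold mult; simpl; ring. }
    apply (is_derive_RInt_bound_comp h (fun a b => RInt h a b) (fun y => y) (fun y => y + 2 * PI) 1 1 y).
    - apply filter_forall. intros u. apply (RInt_correct (V := R_CompleteNormedModule)).
      apply ex_RInt_continuous_R. intros; apply Hc.
    - apply Hc.
    - apply Hc.
    - apply (is_derive_id y).
    - auto_derive; auto; ring. }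
  destruct (MVT_gen G 0 A (fun _ => 0)) as [c [_ Hc2]].
  - intros x _; apply HD.
  - intros x _. apply continuity_pt_filterlim.
    apply (ex_derive_continuous (K := R_AbsRing) (V := R_NormedModule)). exists 0; apply HD.
  - unfold G in Hc2. rewrite Rplus_0_l in Hc2. lra.
Qed.

Lemma Rabs_le_sqr (t y : R) : 0 <= y -> t ^ 2 <= y ^ 2 -> Rabs t <= y.
Proof.
  intros Hy H. rewrite <- (Rabs_right y) by lra. apply Rsqr_le_abs_0. unfold Rsqr. nra.
Qed.

Lemma exp_le_compat x y : x <= y -> exp x <= exp y.
Proof. intros [H|H]; [left; apply exp_increasing; auto | right; rewrite H; auto]. Qed.

Lemma Rdiv_le_cross a b c d : 0 < b -> 0 < d -> a * d <= c * b -> a / b <= c / d.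
Proof.
  intros Hb Hd H. replace (a / b) with ((a * d) * / (b * d)) by (field; lra).
  replace (c / d) with ((c * b) * / (b * d)) by (field; lra).
  apply Rmult_le_compat_r; [left; apply Rinv_0_lt_compat; nra | exact H].
Qed.

Lemma cauchy_schwarz3 x1 x2 x3 y1 y2 y3 :
  (x1 * y1 + x2 * y2 + x3 * y3) ^ 2 <= (x1 ^ 2 + x2 ^ 2 + x3 ^ 2) * (y1 ^ 2 + y2 ^ 2 + y3 ^ 2).
Proof.
  assert (E : (x1^2 + x2^2 + x3^2) * (y1^2 + y2^2 + y3^2) - (x1*y1 + x2*y2 + x3*y3)^2 =
    (x1*y2 - x2*y1)^2 + (x1*y3 - x3*y1)^2 + (x2*y3 - x3*y2)^2) by ring.
  assert (0 <= (x1*y2 - x2*y1)^2) by apply pow2_ge_0.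
  assert (0 <= (x1*y3 - x3*y1)^2) by apply pow2_ge_0.
  assert (0 <= (x2*y3 - x3*y2)^2) by apply pow2_ge_0. lra.
Qed.

(** * Trigonometric and hyperbolic facts *)

Lemma one_minus_cos_ge t : Rabs t <= PI -> t ^ 2 / 18 <= 1 - cos t.
Proof.
  intros Ht.
  replace t with (2 * (t / 2)) at 2 by field. rewrite cos_2a_sin.
  set (x := Rabs (t / 2)).
  assert (Hx0 : 0 <= x) by apply Rabs_pos.
  assert (Hx : x <= PI / 2).
  { unfold x. rewrite Rabs_div by lra. rewrite (Rabs_right 2) by lra. lra. }
  assert (Hs : sin x * sin x = sin (t / 2) * sin (t / 2)).
  { unfold x. destruct (Rle_dec 0 (t / 2)).
    - rewrite Rabs_right by lra. reflexivity.
    - rewrite Rabs_left by lra. rewrite sin_neg. ring. }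
  destruct (sin_bound x 0 Hx0) as [Hlb _].
  { assert (H4 := PI_4). lra. }
  assert (Hsa : sin_approx x (2 * 0 + 1) = x - x ^ 3 / 6).
  { unfold sin_approx, sin_term. simpl. field. }
  rewrite Hsa in Hlb.
  assert (H4 := PI_4).
  assert (Hsx : x / 3 <= sin x) by nra.
  assert (Ht2 : t ^ 2 = 4 * x ^ 2) by (unfold x; rewrite pow2_abs; field).
  assert (sin x * sin x >= (x / 3) * (x / 3)) by nra.
  nra.
Qed.

Lemma Rabs_le_of_1_minus_cos t e :
  Rabs t <= PI -> 0 <= e -> 1 - cos t <= e -> Rabs t <= 5 * sqrt e.
Proof.
  intros Ht He Hc. assert (H := one_minus_cos_ge t Ht).
  apply Rabs_le_sqr. { assert (0 <= sqrt e) by apply sqrt_pos. lra. }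
  replace ((5 * sqrt e) ^ 2) with (25 * (sqrt e ^ 2)) by ring. rewrite pow2_sqrt by lra. lra.
Qed.

Lemma sin_lipschitz a b : Rabs (sin a - sin b) <= Rabs (a - b).
Proof.
  destruct (MVT_abs sin cos b a) as [c [Hc _]].
  { intros c _. apply derivable_pt_lim_sin. }
  rewrite Hc. assert (Rabs (cos c) <= 1) by (apply Rabs_le; apply COS_bound).
  assert (0 <= Rabs (a - b)) by apply Rabs_pos. nra.
Qed.

Lemma sin_sqrt y : 0 <= y <= PI -> sqrt (1 - cos y ^ 2) = sin y.
Proof.
  intros Hy. replace (1 - cos y ^ 2) with (sin y ^ 2) by (rewrite <- (sin2_cos2 y); unfold Rsqr; ring).
  apply sqrt_pow2. apply sin_ge_0; lra.
Qed.

Lemma cos_plus_2PI ph : cos (ph + 2 * PI) = cos ph.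
Proof. rewrite cos_plus, cos_2PI, sin_2PI. ring. Qed.

Lemma sin_plus_2PI ph : sin (ph + 2 * PI) = sin ph.
Proof. rewrite sin_plus, cos_2PI, sin_2PI. ring. Qed.

Lemma unit_dir_sqr a ph : (sin a * cos ph) ^ 2 + (sin a * sin ph) ^ 2 + cos a ^ 2 = 1.
Proof.
  assert (H1 := sin2_cos2 a). assert (H2 := sin2_cos2 ph). unfold Rsqr in *.
  replace ((sin a * cos ph) ^ 2 + (sin a * sin ph) ^ 2 + cos a ^ 2)
    with (sin a * sin a * (sin ph * sin ph + cos ph * cos ph) + cos a * cos a) by ring.
  rewrite H2. lra.
Qed.

Lemma unit_vector_polar u1 u2 u3 : u1 ^ 2 + u2 ^ 2 + u3 ^ 2 = 1 ->
  exists ab pb, 0 <= ab <= PI /\ u1 = sin ab * cos pb /\ u2 = sin ab * sin pb /\ u3 = cos ab.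
Proof.
  intros Hu.
  assert (H3 : -1 <= u3 <= 1).
  { assert (u3^2 <= 1) by nra. split; nra. }
  exists (acos u3).
  assert (Hs : sin (acos u3) = sqrt (u1^2 + u2^2)).
  { rewrite sin_acos by exact H3. f_equal. unfold Rsqr. lra. }
  set (rho := sqrt (u1^2 + u2^2)) in *.
  assert (Hrho : rho * rho = u1^2 + u2^2) by (apply sqrt_sqrt; nra).
  assert (Hr0 : 0 <= rho) by apply sqrt_pos.
  destruct (Req_dec rho 0) as [Z|Z].
  - exists 0. rewrite Hs, Z, cos_0, sin_0. rewrite Z in Hrho.
    assert (u1 = 0) by nra. assert (u2 = 0) by nra.
    repeat split; try apply acos_bound; try lra. rewrite cos_acos; auto.
  - assert (Hrp : 0 < rho) by lra.
    set (v := u1 / rho). set (w := u2 / rho).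
    assert (Hvw : v^2 + w^2 = 1) by (unfold v, w; field_simplify; [|lra]; rewrite <- Hrho; field; lra).
    assert (Hv : -1 <= v <= 1) by (split; nra).
    assert (Hsw : sqrt (1 - v²) = Rabs w).
    { rewrite <- sqrt_Rsqr_abs. f_equal. unfold Rsqr. lra. }
    destruct (Rle_dec 0 w) as [Hw|Hw].
    + exists (acos v). repeat split; try apply acos_bound.
      * rewrite Hs, cos_acos by auto. unfold v. field. lra.
      * rewrite Hs, sin_acos by auto. rewrite Hsw, Rabs_right by lra. unfold w. field. lra.
      * rewrite cos_acos; auto.
    + exists (- acos v). repeat split; try apply acos_bound.
      * rewrite Hs, cos_neg, cos_acos by auto. unfold v. field. lra.
      * rewrite Hs, sin_neg, sin_acos by auto. rewrite Hsw, Rabs_left by lra. unfold w. field. lra.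
      * rewrite cos_acos; auto.
Qed.

Lemma cosh_sqr_sub_sinh_sqr r : cosh r ^ 2 - sinh r ^ 2 = 1.
Proof.
  unfold cosh, sinh. assert (H := exp_plus r (- r)). rewrite Rplus_opp_r, exp_0 in H. nra.
Qed.

Lemma sinh_pos r : 0 < r -> 0 < sinh r.
Proof. intros H. unfold sinh. assert (exp (- r) < exp r) by (apply exp_increasing; lra). lra. Qed.

Lemma cosh_pos r : 0 < cosh r.
Proof. unfold cosh. assert (0 < exp r) by apply exp_pos. assert (0 < exp (- r)) by apply exp_pos. lra. Qed.

Lemma sinh_lt_cosh r : sinh r < cosh r.
Proof. unfold cosh, sinh. assert (0 < exp (- r)) by apply exp_pos. lra. Qed.

Lemma cosh_add_sinh r : cosh r + sinh r = exp r.
Proof. unfold cosh, sinh. field. Qed.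

Lemma cosh_sub_sinh r : cosh r - sinh r = exp (- r).
Proof. unfold cosh, sinh. field. Qed.

Lemma cosh_ge1 r : 1 <= cosh r.
Proof.
  unfold cosh. rewrite exp_Ropp. assert (He : 0 < exp r) by apply exp_pos.
  set (e := exp r) in *. clearbody e. apply Rmult_le_reg_r with (2 * e); [lra|].
  replace ((e + / e) / 2 * (2 * e)) with (e * e + 1) by (field; lra).
  assert (0 <= (e - 1) ^ 2) by apply pow2_ge_0. nra.
Qed.

Lemma cosh_le_exp r : 0 <= r -> cosh r <= exp r.
Proof. intros H. unfold cosh. assert (exp (- r) <= exp r) by (apply exp_le_compat; lra). lra. Qed.

Lemma half_exp_le_cosh r : exp r / 2 <= cosh r.
Proof. unfold cosh. assert (0 < exp (- r)) by apply exp_pos. lra. Qed.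

Lemma exp2_ge4 : 4 <= exp 2.
Proof. replace 2 with (1 + 1) by ring. rewrite exp_plus. assert (H := exp_ineq1 1 ltac:(lra)). nra. Qed.

Lemma cosh_add_sinh_mul_pos r k : -1 <= k <= 1 -> 0 < cosh r + sinh r * k.
Proof.
  intros Hk. destruct (Rle_dec 0 (sinh r)).
  - assert (- sinh r <= sinh r * k) by nra. assert (h := sinh_lt_cosh r). lra.
  - assert (sinh r <= sinh r * k) by nra.
    assert (0 < cosh r + sinh r) by (rewrite cosh_add_sinh; apply exp_pos). lra.
Qed.

Lemma cosh_sub_sinh_mul_pos r v : -1 <= v <= 1 -> 0 < cosh r - sinh r * v.
Proof.
  intros H. replace (cosh r - sinh r * v) with (cosh r + sinh r * (- v)) by ring.
  apply cosh_add_sinh_mul_pos; lra.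
Qed.

Lemma cosh_sub_sinh_cos_pos r a : 0 < cosh r - sinh r * cos a.
Proof. apply cosh_sub_sinh_mul_pos, COS_bound. Qed.

(* Clears a rational identity in [cosh r], [sinh r], [cos a] whose only denominators are powers
   of [cosh r - sinh r * cos a], by passing to [e = exp r]. *)
Ltac exp_field r a :=
  unfold cosh, sinh in *; rewrite ?exp_Ropp in *;
  let He := fresh in assert (He : 0 < exp r) by apply exp_pos;
  let e := fresh "e" in set (e := exp r) in *;
  let Key := fresh in
  assert (Key : 0 < e * e + 1 - (e * e - 1) * cos a);
  [ replace (e * e + 1 - (e * e - 1) * cos a)
      with (2 * e * ((e + / e) / 2 - (e - / e) / 2 * cos a)) by (field; lra);
    apply Rmult_lt_0_compat; lra
  | field; repeat split; lra ].

(** * Continuity *)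

Lemma ball_R (a b e : R) : ball a e b <-> Rabs (b - a) < e.
Proof. unfold ball; simpl. unfold AbsRing_ball, abs, minus, plus, opp; simpl. tauto. Qed.

Lemma ball_prod {U V : UniformSpace} (a b : U * V) e :
  ball a e b <-> ball (fst a) e (fst b) /\ ball (snd a) e (snd b).
Proof. unfold ball at 1; simpl. unfold prod_ball. tauto. Qed.

Lemma continuous_locally_abs {U : UniformSpace} (f : U -> R) x : continuous f x ->
  forall eps : posreal, locally x (fun y => Rabs (f y - f x) < eps).
Proof.
  intros H eps. apply filterlim_locally with (eps := eps) in H.
  revert H. apply filter_imp. intros y Hy. apply ball_R in Hy. exact Hy.
Qed.

Lemma continuous_locally_pos (g : R -> R) u0 :
  continuous g u0 -> 0 < g u0 -> locally u0 (fun u => 0 < g u).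
Proof.
  intros Hc Hp. assert (H2 : 0 < g u0 / 2) by lra.
  apply continuous_locally_abs with (eps := mkposreal _ H2) in Hc. revert Hc. apply filter_imp.
  intros u Hu. simpl in Hu. apply Rabs_def2 in Hu. lra.
Qed.

Lemma continuous_slice {U : UniformSpace} (h : U -> R -> R) x t :
  continuous (fun q : U * R => h (fst q) (snd q)) (x, t) -> continuous (h x) t.
Proof.
  intros H. apply filterlim_locally. intros eps.
  apply continuous_locally_abs with (eps := eps) in H. destruct H as [d Hd]. exists d.
  intros s Hs. apply ball_R. apply (Hd (x, s)). apply ball_prod; split; [apply ball_center | exact Hs].
Qed.

Lemma continuous_pair_id {A B : UniformSpace} (q : A * B) :
  continuous (fun x0 : A * B => (fst x0, snd x0)) q.
Proof.
  replace (fun x0 : A * B => (fst x0, snd x0)) with (fun x0 : A * B => x0).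
  - apply continuous_id.
  - apply functional_extensionality. intros [u v]. reflexivity.
Qed.

(* Heine's theorem for a family of functions on a compact interval, via Cousin's lemma. *)
Lemma continuous_param_uniform {U : UniformSpace} (h : U -> R -> R) (A B : R) (x : U) e :
  0 < e ->
  (forall t, A <= t <= B -> continuous (fun q : U * R => h (fst q) (snd q)) (x, t)) ->
  exists d : posreal, forall y, ball x d y -> forall t, A <= t <= B -> Rabs (h y t - h x t) <= 2 * e.
Proof.
  intros He Hj.
  assert (Hd : forall t, exists d : posreal, A <= t <= B -> forall y t',
     ball x d y -> ball t d t' -> Rabs (h y t' - h x t) < e).
  { intros t. destruct (Rle_dec A t) as [H1|H1]; [destruct (Rle_dec t B) as [H2|H2]|].
    - specialize (Hj t (conj H1 H2)).
      apply filterlim_locally with (eps := mkposreal e He) in Hj. destruct Hj as [d Hd].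
      exists d. intros _ y t' By Bt.
      assert (Hb : ball (x, t) d (y, t')) by (apply ball_prod; simpl; auto).
      specialize (Hd _ Hb). apply ball_R in Hd. exact Hd.
    - exists (mkposreal 1 Rlt_0_1). intros [_ Hc]; lra.
    - exists (mkposreal 1 Rlt_0_1). intros [Hc _]; lra. }
  set (delta := fun t => proj1_sig (constructive_indefinite_description _ (Hd t))).
  assert (Hdelta : forall t, A <= t <= B -> forall y t', ball x (delta t) y -> ball t (delta t) t' ->
     Rabs (h y t' - h x t) < e).
  { intros t. unfold delta. destruct (constructive_indefinite_description _ (Hd t)). simpl. auto. }
  destruct (compactness_value_1d A B delta) as [d Hcd].
  exists d. intros y By t Ht.
  apply NNPP. intros Hn. apply (Hcd t Ht). intros [t0 [Ht0 [Hdt Hdd]]].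
  apply Hn.
  assert (Hb : ball t0 (delta t0) t) by (apply ball_R; exact Hdt).
  assert (X1 : Rabs (h y t - h x t0) < e).
  { apply Hdelta; [exact Ht0 | apply (ball_le x d); [exact Hdd | exact By] | exact Hb]. }
  assert (X2 : Rabs (h x t - h x t0) < e).
  { apply Hdelta; [exact Ht0 | apply ball_center | exact Hb]. }
  replace (h y t - h x t) with ((h y t - h x t0) - (h x t - h x t0)) by ring.
  eapply Rle_trans; [apply Rabs_triang|]. rewrite Rabs_Ropp. lra.
Qed.

Lemma continuous_RInt_param {U : UniformSpace} (h : U -> R -> R) (A B : R) (x : U) :
  A <= B ->
  (forall t, A <= t <= B -> continuous (fun q : U * R => h (fst q) (snd q)) (x, t)) ->
  locally x (fun y => forall t, A <= t <= B -> continuous (h y) t) ->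
  continuous (fun y => RInt (h y) A B) x.
Proof.
  intros HAB Hj Hl. apply filterlim_locally. intros eps.
  set (e := eps / (2 * (B - A) + 2)).
  assert (He : 0 < e) by (unfold e; apply Rdiv_lt_0_compat; [apply cond_pos | lra]).
  destruct (continuous_param_uniform h A B x e He Hj) as [d Hd].
  generalize (filter_and _ _ (locally_ball x d) Hl). apply filter_imp.
  intros y [By Hy]. apply ball_R.
  assert (Hex : forall z, (forall t, A <= t <= B -> continuous (h z) t) -> ex_RInt (h z) A B).
  { intros z Hz. apply ex_RInt_continuous_R. intros t Ht.
    rewrite Rmin_left in Ht by lra. rewrite Rmax_right in Ht by lra. auto. }
  assert (Ey := Hex y Hy).
  assert (Ex : ex_RInt (h x) A B) by (apply Hex; intros t Ht; apply continuous_slice, Hj, Ht).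
  replace (RInt (h y) A B - RInt (h x) A B) with (RInt (fun t => h y t - h x t) A B)
    by (rewrite (RInt_minus (V := R_CompleteNormedModule)); auto).
  eapply Rle_lt_trans.
  - apply abs_RInt_le_const; [exact HAB | apply (ex_RInt_minus (V := R_CompleteNormedModule)); auto |].
    intros t Ht. exact (Hd y By t Ht).
  - unfold e. destruct eps as [ep Hep]; simpl.
    apply Rmult_lt_reg_r with (2 * (B - A) + 2); [lra|].
    field_simplify; [|lra]. nra.
Qed.

Definition joint_continuous (h : R -> R -> R) y t :=
  continuous (fun q : R * R => h (fst q) (snd q)) (y, t).

Lemma continuous_RInt_param_R (h : R -> R -> R) A B y0 : A <= B ->
  locally y0 (fun y => forall t, A <= t <= B -> joint_continuous h y t) ->
  continuous (fun y => RInt (h y) A B) y0.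
Proof.
  intros HAB Hl. apply (continuous_RInt_param h); auto.
  - intros t Ht. destruct Hl as [e He]. apply (He y0 (ball_center y0 e) t Ht).
  - revert Hl. apply filter_imp. intros y Hy t Ht. apply continuous_slice. apply Hy; auto.
Qed.

Lemma ex_RInt_joint_continuous (h : R -> R -> R) y A B : A <= B ->
  (forall t, A <= t <= B -> joint_continuous h y t) -> ex_RInt (h y) A B.
Proof.
  intros HAB H. apply ex_RInt_continuous_R. intros t Ht. rewrite Rmin_left in Ht by lra.
  rewrite Rmax_right in Ht by lra. apply continuous_slice. apply H; auto.
Qed.

Lemma cont_const {U : UniformSpace} (k : R) (x : U) : continuous (fun _ : U => k) x.
Proof. apply continuous_const. Qed.
Lemma cont_plus {U : UniformSpace} (f g : U -> R) x :
  continuous f x -> continuous g x -> continuous (fun y => f y + g y) x.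
Proof. intros; apply (continuous_plus f g); auto. Qed.
Lemma cont_opp {U : UniformSpace} (f : U -> R) x : continuous f x -> continuous (fun y => - f y) x.
Proof. intros; apply (continuous_opp f); auto. Qed.
Lemma cont_minus {U : UniformSpace} (f g : U -> R) x :
  continuous f x -> continuous g x -> continuous (fun y => f y - g y) x.
Proof. intros; unfold Rminus; apply cont_plus; auto; apply cont_opp; auto. Qed.
Lemma cont_mult {U : UniformSpace} (f g : U -> R) x :
  continuous f x -> continuous g x -> continuous (fun y => f y * g y) x.
Proof. intros; apply (continuous_mult f g); auto. Qed.
Lemma cont_comp {U : UniformSpace} (F : R -> R) (f : U -> R) x :
  continuous f x -> continuous F (f x) -> continuous (fun y => F (f y)) x.
Proof. intros; apply (continuous_comp f F); auto. Qed.
Lemma cont_inv {U : UniformSpace} (f : U -> R) x :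
  continuous f x -> f x <> 0 -> continuous (fun y => / f y) x.
Proof.
  intros H1 H2. apply (cont_comp Rinv f x H1).
  apply (continuous_Rinv_comp (fun y => y)); auto. apply continuous_id.
Qed.
Lemma cont_div {U : UniformSpace} (f g : U -> R) x :
  continuous f x -> continuous g x -> g x <> 0 -> continuous (fun y => f y / g y) x.
Proof. intros; unfold Rdiv; apply cont_mult; auto; apply cont_inv; auto. Qed.
Lemma cont_pow {U : UniformSpace} (f : U -> R) n x : continuous f x -> continuous (fun y => f y ^ n) x.
Proof. intros H. induction n; simpl; [apply cont_const | apply cont_mult; auto]. Qed.
Lemma cont_fst {A B : UniformSpace} (q : A * B) : continuous (fun y : A * B => fst y) q.
Proof. destruct q; apply continuous_fst. Qed.
Lemma cont_snd {A B : UniformSpace} (q : A * B) : continuous (fun y : A * B => snd y) q.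
Proof. destruct q; apply continuous_snd. Qed.
Lemma cont_fst_comp {U A B : UniformSpace} (f : U -> A * B) x :
  continuous f x -> continuous (fun y => fst (f y)) x.
Proof. intros; apply (continuous_comp f fst); auto. apply cont_fst. Qed.
Lemma cont_snd_comp {U A B : UniformSpace} (f : U -> A * B) x :
  continuous f x -> continuous (fun y => snd (f y)) x.
Proof. intros; apply (continuous_comp f snd); auto. apply cont_snd. Qed.
Lemma continuous_cosh (x : R) : continuous cosh x.
Proof.
  apply continuity_pt_filterlim. apply derivable_continuous_pt.
  exists (sinh x). apply derivable_pt_lim_cosh.
Qed.
Lemma continuous_sinh (x : R) : continuous sinh x.
Proof.
  apply continuity_pt_filterlim. apply derivable_continuous_pt.
  exists (cosh x). apply derivable_pt_lim_sinh.
Qed.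

Ltac cont_step :=
  lazymatch goal with
  | |- continuous (fun _ => ?c) _ => apply cont_const
  | |- continuous (fun y => y) _ => apply continuous_id
  | |- continuous (fun _ => _ + _) _ => apply cont_plus
  | |- continuous (fun _ => _ - _) _ => apply cont_minus
  | |- continuous (fun _ => _ * _) _ => apply cont_mult
  | |- continuous (fun _ => - _) _ => apply cont_opp
  | |- continuous (fun _ => sqrt _) _ => apply (cont_comp sqrt); [|apply continuous_sqrt]
  | |- continuous (fun _ => cos _) _ => apply (cont_comp cos); [|apply continuous_cos]
  | |- continuous (fun _ => sin _) _ => apply (cont_comp sin); [|apply continuous_sin]
  | |- continuous (fun _ => _ ^ _) _ => apply cont_pow
  | |- continuous (fun _ => cosh _) _ => apply (cont_comp cosh); [|apply continuous_cosh]
  | |- continuous (fun _ => sinh _) _ => apply (cont_comp sinh); [|apply continuous_sinh]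
  | |- continuous (fun _ => exp _) _ => apply (cont_comp exp); [|apply continuous_exp]
  | |- continuous fst _ => apply cont_fst
  | |- continuous snd _ => apply cont_snd
  | |- continuous (fun y => fst y) _ => apply cont_fst
  | |- continuous (fun y => snd y) _ => apply cont_snd
  | |- continuous (fun _ => fst _) _ => apply cont_fst_comp
  | |- continuous (fun _ => snd _) _ => apply cont_snd_comp
  | |- continuous (fun _ => _ / _) _ =>
      apply cont_div; [ | | cbn [fst snd]; try (apply Rgt_not_eq; apply cosh_sub_sinh_cos_pos) ]
  | |- continuous (Rmult ?a) _ =>
      apply (cont_mult (fun _ => a) (fun y => y)); [apply cont_const | apply continuous_id]
  | |- continuous (Rplus ?a) _ =>
      apply (cont_plus (fun _ => a) (fun y => y)); [apply cont_const | apply continuous_id]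
  | |- continuous (Rminus ?a) _ =>
      apply (cont_minus (fun _ => a) (fun y => y)); [apply cont_const | apply continuous_id]
  | |- continuous sin _ => apply continuous_sin
  | |- continuous cos _ => apply continuous_cos
  | |- continuous sqrt _ => apply continuous_sqrt
  | |- continuous exp _ => apply continuous_exp
  | |- continuous cosh _ => apply continuous_cosh
  | |- continuous sinh _ => apply continuous_sinh
  end.
Ltac cont := repeat cont_step.

(** * Functions on the half-space *)

(* Continuity for the sup-norm, which combines more easily than [cont_H3] with coordinatewise
   estimates. *)
Definition cube_cont_at (h : pt -> R) (p : pt) := forall eps, 0 < eps -> exists delta, 0 < delta /\
  forall q, inH3 q -> Rabs (px q - px p) < delta -> Rabs (py q - py p) < delta ->
    Rabs (pz q - pz p) < delta -> Rabs (h q - h p) < eps.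

Definition cube_cont (h : pt -> R) := forall p, inH3 p -> cube_cont_at h p.

Lemma cont_H3_cube_cont h : cont_H3 h -> cube_cont h.
Proof.
  intros H p Hp eps He. destruct (H p Hp eps He) as [d [Hd Hq]].
  exists (d / 2). split; [lra|]. intros q Hq3 H1 H2 H3. apply Hq; auto.
  assert (Hsq : forall u v, Rabs (v - u) < d / 2 -> (u - v) ^ 2 <= d * d / 4).
  { intros u v Huv. rewrite <- pow2_abs, Rabs_minus_sym.
    assert (0 <= Rabs (v - u)) by apply Rabs_pos. nra. }
  assert (Hed : edist2 p q < d * d).
  { unfold edist2. assert (h1 := Hsq _ _ H1). assert (h2 := Hsq _ _ H2). assert (h3 := Hsq _ _ H3).
    nra. }
  rewrite <- (sqrt_square d) by lra. apply sqrt_lt_1; [| nra | exact Hed].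
  unfold edist2. assert (h1 := pow2_ge_0 (px p - px q)). assert (h2 := pow2_ge_0 (py p - py q)).
  assert (h3 := pow2_ge_0 (pz p - pz q)). lra.
Qed.

Lemma continuous_comp_cube_cont {U : UniformSpace} (h : pt -> R) (e1 e2 e3 : U -> R) (x : U) :
  cube_cont h -> continuous e1 x -> continuous e2 x -> continuous e3 x -> 0 < e3 x ->
  continuous (fun y => h (e1 y, e2 y, e3 y)) x.
Proof.
  intros Hh H1 H2 H3 Hz. apply filterlim_locally. intros eps.
  destruct (Hh (e1 x, e2 x, e3 x) Hz eps (cond_pos eps)) as [d [Hd Hq]].
  assert (Hd' : 0 < Rmin d (e3 x)) by (apply Rmin_pos; lra).
  set (dd := mkposreal _ Hd').
  apply continuous_locally_abs with (eps := dd) in H1.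
  apply continuous_locally_abs with (eps := dd) in H2.
  apply continuous_locally_abs with (eps := dd) in H3.
  generalize (filter_and _ _ H1 (filter_and _ _ H2 H3)). apply filter_imp.
  intros y [B1 [B2 B3]].
  apply ball_R. simpl in *.
  assert (Hm1 := Rmin_l d (e3 x)). assert (Hm2 := Rmin_r d (e3 x)).
  apply Hq; unfold inH3, px, py, pz; simpl; try lra.
  apply Rabs_def2 in B3. lra.
Qed.

Lemma MVT_between (g dg : R -> R) a b :
  (forall c, Rmin a b <= c <= Rmax a b -> derivable_pt_lim g c (dg c)) ->
  exists c, Rmin a b <= c <= Rmax a b /\ g b - g a = dg c * (b - a).
Proof.
  intros H. destruct (MVT_gen g a b dg) as [c [Hc He]].
  - intros x Hx. apply is_derive_Reals. apply H. lra.
  - intros x Hx. apply derivable_continuous_pt. exists (dg x). apply H. exact Hx.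
  - exists c. split; auto.
Qed.

Lemma Rabs_between_le a b c : Rmin a b <= c <= Rmax a b -> Rabs (c - a) <= Rabs (b - a).
Proof. intros H. apply Rabs_le_between_min_max. rewrite Rmin_comm, Rmax_comm. exact H. Qed.

Lemma MVT_partials f d1 d2 d3 (p q : pt) : has_partials f d1 d2 d3 -> inH3 p -> inH3 q ->
  exists c1 c2 c3, Rabs (c1 - px p) <= Rabs (px q - px p) /\
    Rabs (c2 - py p) <= Rabs (py q - py p) /\ Rabs (c3 - pz p) <= Rabs (pz q - pz p) /\ 0 < c3 /\
    f q - f p = d1 (c1, py q, pz q) * (px q - px p) + d2 (px p, c2, pz q) * (py q - py p)
                + d3 (px p, py p, c3) * (pz q - pz p).
Proof.
  intros H Hp Hq. destruct p as [[p1 p2] p3], q as [[q1 q2] q3].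
  unfold inH3, px, py, pz in *; simpl in *.
  destruct (MVT_between (fun t => f (t, q2, q3)) (fun t => d1 (t, q2, q3)) p1 q1) as [c1 [Hc1 E1]].
  { intros c _. exact (proj1 (H (c, q2, q3) Hq)). }
  destruct (MVT_between (fun t => f (p1, t, q3)) (fun t => d2 (p1, t, q3)) p2 q2) as [c2 [Hc2 E2]].
  { intros c _. exact (proj1 (proj2 (H (p1, c, q3) Hq))). }
  destruct (MVT_between (fun t => f (p1, p2, t)) (fun t => d3 (p1, p2, t)) p3 q3) as [c3 [Hc3 E3]].
  { intros c Hc. assert (Hc0 : 0 < c) by (unfold Rmin, Rmax in Hc; destruct Rle_dec; lra).
    exact (proj2 (proj2 (H (p1, p2, c) Hc0))). }
  exists c1, c2, c3. repeat split; try (apply Rabs_between_le; assumption).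
  - unfold Rmin, Rmax in Hc3; destruct Rle_dec; lra.
  - simpl in *. lra.
Qed.

Lemma increment_partials f d1 d2 d3 p :
  has_partials f d1 d2 d3 -> inH3 p ->
  cube_cont_at d1 p -> cube_cont_at d2 p -> cube_cont_at d3 p ->
  forall e, 0 < e -> exists delta, 0 < delta /\ forall q, inH3 q ->
    Rabs (px q - px p) < delta -> Rabs (py q - py p) < delta -> Rabs (pz q - pz p) < delta ->
    exists X1 X2 X3, Rabs (X1 - d1 p) < e /\ Rabs (X2 - d2 p) < e /\ Rabs (X3 - d3 p) < e /\
      f q - f p = X1 * (px q - px p) + X2 * (py q - py p) + X3 * (pz q - pz p).
Proof.
  intros Hp Hpp Hc1 Hc2 Hc3 e He.
  destruct (Hc1 e He) as [e1 [He1 H1]].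
  destruct (Hc2 e He) as [e2 [He2 H2]].
  destruct (Hc3 e He) as [e3 [He3 H3]].
  exists (Rmin e1 (Rmin e2 e3)). split; [repeat apply Rmin_pos; lra|].
  intros q Hq Q1 Q2 Q3.
  assert (m1 := Rmin_l e1 (Rmin e2 e3)). assert (m2 := Rmin_r e1 (Rmin e2 e3)).
  assert (m3 := Rmin_l e2 e3). assert (m4 := Rmin_r e2 e3).
  destruct (MVT_partials f d1 d2 d3 p q Hp Hpp Hq) as [c1 [c2 [c3 [A1 [A2 [A3 [A4 E]]]]]]].
  unfold inH3 in Hq.
  exists (d1 (c1, py q, pz q)), (d2 (px p, c2, pz q)), (d3 (px p, py p, c3)).
  repeat split; [apply H1 | apply H2 | apply H3 | exact E];
    unfold inH3, px, py, pz in *; simpl; rewrite ?Rminus_diag, ?Rabs_R0; lra.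
Qed.

Lemma partials_cube_cont f d1 d2 d3 :
  has_partials f d1 d2 d3 -> cube_cont d1 -> cube_cont d2 -> cube_cont d3 -> cube_cont f.
Proof.
  intros Hp Hc1 Hc2 Hc3 p Hpp eps He.
  destruct (increment_partials f d1 d2 d3 p Hp Hpp (Hc1 p Hpp) (Hc2 p Hpp) (Hc3 p Hpp) 1 Rlt_0_1)
    as [dl [Hdl Hinc]].
  set (K := Rabs (d1 p) + Rabs (d2 p) + Rabs (d3 p) + 3).
  assert (HK : 3 <= K).
  { unfold K. assert (h1 := Rabs_pos (d1 p)). assert (h2 := Rabs_pos (d2 p)).
    assert (h3 := Rabs_pos (d3 p)). lra. }
  assert (He' : 0 < eps / (2 * K)) by (apply Rdiv_lt_0_compat; lra).
  exists (Rmin dl (eps / (2 * K))). split; [apply Rmin_pos; lra|].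
  intros q Hq Q1 Q2 Q3.
  assert (m1 := Rmin_l dl (eps / (2 * K))). assert (m2 := Rmin_r dl (eps / (2 * K))).
  destruct (Hinc q Hq ltac:(lra) ltac:(lra) ltac:(lra)) as [X1 [X2 [X3 [B1 [B2 [B3 E]]]]]].
  rewrite E.
  assert (Hterm : forall X D u, Rabs (X - D) < 1 -> Rabs u < eps / (2 * K) ->
            Rabs (X * u) <= (Rabs D + 1) * (eps / (2 * K))).
  { intros X D u HX Hu. rewrite Rabs_mult.
    assert (h := Rabs_triang_inv X D).
    apply Rmult_le_compat; try apply Rabs_pos; lra. }
  assert (T1 := Hterm X1 (d1 p) (px q - px p) B1 ltac:(lra)).
  assert (T2 := Hterm X2 (d2 p) (py q - py p) B2 ltac:(lra)).
  assert (T3 := Hterm X3 (d3 p) (pz q - pz p) B3 ltac:(lra)).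
  assert (X4 : (Rabs (d1 p) + 1) * (eps / (2 * K)) + (Rabs (d2 p) + 1) * (eps / (2 * K))
             + (Rabs (d3 p) + 1) * (eps / (2 * K)) = eps / 2) by (unfold K in *; field; lra).
  eapply Rle_lt_trans; [apply Rabs_triang|].
  eapply Rle_lt_trans; [apply Rplus_le_compat_r; apply Rabs_triang|].
  lra.
Qed.

Lemma C1_H3_cube_cont f : C1_H3 f -> cube_cont f.
Proof.
  intros [d1 [d2 [d3 [Hp [Hc1 [Hc2 Hc3]]]]]].
  apply (partials_cube_cont f d1 d2 d3 Hp); apply cont_H3_cube_cont; auto.
Qed.

Lemma Rabs_mult_sub_le X D q l e1 e2 :
  Rabs (X - D) <= e1 -> Rabs (q - l) <= e2 -> e2 <= 1 ->
  Rabs (X * q - D * l) <= e1 * (Rabs l + 1) + Rabs D * e2.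
Proof.
  intros HX Hq He2.
  replace (X * q - D * l) with ((X - D) * q + D * (q - l)) by ring.
  eapply Rle_trans; [apply Rabs_triang|]. rewrite !Rabs_mult.
  assert (Rabs q <= Rabs l + 1) by (assert (h := Rabs_triang_inv q l); lra).
  apply Rplus_le_compat; apply Rmult_le_compat; try apply Rabs_pos; lra.
Qed.

Lemma Rabs_dot3_sub_le X1 X2 X3 D1 D2 D3 q1 q2 q3 l1 l2 l3 e1 e2 :
  Rabs (X1 - D1) <= e1 -> Rabs (X2 - D2) <= e1 -> Rabs (X3 - D3) <= e1 ->
  Rabs (q1 - l1) <= e2 -> Rabs (q2 - l2) <= e2 -> Rabs (q3 - l3) <= e2 -> e2 <= 1 ->
  Rabs (X1 * q1 + X2 * q2 + X3 * q3 - (D1 * l1 + D2 * l2 + D3 * l3))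
  <= e1 * (Rabs l1 + Rabs l2 + Rabs l3 + 3) + (Rabs D1 + Rabs D2 + Rabs D3) * e2.
Proof.
  intros H1 H2 H3 G1 G2 G3 He2.
  assert (T1 := Rabs_mult_sub_le _ _ _ _ _ _ H1 G1 He2).
  assert (T2 := Rabs_mult_sub_le _ _ _ _ _ _ H2 G2 He2).
  assert (T3 := Rabs_mult_sub_le _ _ _ _ _ _ H3 G3 He2).
  replace (X1 * q1 + X2 * q2 + X3 * q3 - (D1 * l1 + D2 * l2 + D3 * l3))
    with ((X1 * q1 - D1 * l1) + (X2 * q2 - D2 * l2) + (X3 * q3 - D3 * l3)) by ring.
  eapply Rle_trans; [apply Rabs_triang|].
  eapply Rle_trans; [apply Rplus_le_compat_r; apply Rabs_triang|].
  lra.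
Qed.

Lemma Rabs_increment_lt g t0 h l e m B : h <> 0 -> 0 < B -> e <= 1 -> Rabs l + 1 <= B ->
  Rabs ((g (t0 + h) - g t0) / h - l) < e -> Rabs h < m / B -> Rabs (g (t0 + h) - g t0) < m.
Proof.
  intros Hh HB He Hl Hq Hhm.
  replace (g (t0 + h) - g t0) with ((g (t0 + h) - g t0) / h * h) by (field; exact Hh).
  rewrite Rabs_mult.
  assert (Hq' : Rabs ((g (t0 + h) - g t0) / h) <= B).
  { assert (h1 := Rabs_triang_inv ((g (t0 + h) - g t0) / h) l). lra. }
  apply Rle_lt_trans with (B * Rabs h); [apply Rmult_le_compat_r; [apply Rabs_pos | exact Hq'] |].
  apply Rmult_lt_reg_l with (/ B); [apply Rinv_0_lt_compat; lra|].
  rewrite <- Rmult_assoc, Rinv_l, Rmult_1_l by lra. unfold Rdiv in Hhm. lra.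
Qed.

Lemma derivable_pt_lim_3 g1 g2 g3 l1 l2 l3 t0 e :
  derivable_pt_lim g1 t0 l1 -> derivable_pt_lim g2 t0 l2 -> derivable_pt_lim g3 t0 l3 -> 0 < e ->
  exists del : posreal, forall h, h <> 0 -> Rabs h < del ->
    Rabs ((g1 (t0 + h) - g1 t0) / h - l1) < e /\ Rabs ((g2 (t0 + h) - g2 t0) / h - l2) < e /\
    Rabs ((g3 (t0 + h) - g3 t0) / h - l3) < e.
Proof.
  intros G1 G2 G3 He.
  destruct (G1 e He) as [dg1 Dg1]. destruct (G2 e He) as [dg2 Dg2]. destruct (G3 e He) as [dg3 Dg3].
  assert (Hd : 0 < Rmin dg1 (Rmin dg2 dg3)) by (repeat apply Rmin_pos; apply cond_pos).
  exists (mkposreal _ Hd). intros h Hh0 Hh. simpl in Hh.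
  assert (h1 := Rmin_l dg1 (Rmin dg2 dg3)). assert (h2 := Rmin_r dg1 (Rmin dg2 dg3)).
  assert (h3 := Rmin_l dg2 dg3). assert (h4 := Rmin_r dg2 dg3).
  split; [apply Dg1 | split; [apply Dg2 | apply Dg3]]; auto; lra.
Qed.

Lemma eps_split_lt eps L D e2 : 0 < eps -> 0 <= L -> 0 <= D -> e2 <= eps / (2 * (D + 1)) ->
  eps / (2 * (L + 3)) * (L + 3) + D * e2 < eps.
Proof.
  intros He HL HD He2.
  replace (eps / (2 * (L + 3)) * (L + 3)) with (eps / 2) by (field; lra).
  assert (D * e2 <= D * (eps / (2 * (D + 1)))) by (apply Rmult_le_compat_l; lra).
  assert (D * (eps / (2 * (D + 1))) < eps / 2).
  { apply Rmult_lt_reg_r with (2 * (D + 1)); [lra|].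
    replace (D * (eps / (2 * (D + 1))) * (2 * (D + 1))) with (D * eps) by (field; lra). nra. }
  lra.
Qed.

Lemma derivable_pt_lim_comp_partials f d1 d2 d3 g1 g2 g3 l1 l2 l3 t0 :
  has_partials f d1 d2 d3 -> cube_cont d1 -> cube_cont d2 -> cube_cont d3 ->
  derivable_pt_lim g1 t0 l1 -> derivable_pt_lim g2 t0 l2 -> derivable_pt_lim g3 t0 l3 ->
  0 < g3 t0 ->
  derivable_pt_lim (fun t => f (g1 t, g2 t, g3 t)) t0
    (d1 (g1 t0, g2 t0, g3 t0) * l1 + d2 (g1 t0, g2 t0, g3 t0) * l2
     + d3 (g1 t0, g2 t0, g3 t0) * l3).
Proof.
  intros Hp Hc1 Hc2 Hc3 G1 G2 G3 Hz eps Heps.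
  set (P := (g1 t0, g2 t0, g3 t0)).
  assert (HP : inH3 P) by exact Hz.
  set (L := Rabs l1 + Rabs l2 + Rabs l3).
  set (D := Rabs (d1 P) + Rabs (d2 P) + Rabs (d3 P)).
  assert (HL : 0 <= Rabs l1 <= L /\ Rabs l2 <= L /\ Rabs l3 <= L).
  { unfold L. assert (h1 := Rabs_pos l1). assert (h2 := Rabs_pos l2). assert (h3 := Rabs_pos l3).
    lra. }
  assert (HD : 0 <= D) by (unfold D; assert (h1 := Rabs_pos (d1 P));
    assert (h2 := Rabs_pos (d2 P)); assert (h3 := Rabs_pos (d3 P)); lra).
  set (e1 := eps / (2 * (L + 3))).
  assert (He1 : 0 < e1) by (unfold e1; apply Rdiv_lt_0_compat; lra).
  set (e2 := Rmin 1 (eps / (2 * (D + 1)))).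
  assert (He2 : 0 < e2) by (unfold e2; apply Rmin_pos; [lra | apply Rdiv_lt_0_compat; lra]).
  assert (He2a := Rmin_l 1 (eps / (2 * (D + 1)))). assert (He2b := Rmin_r 1 (eps / (2 * (D + 1)))).
  fold e2 in He2a, He2b.
  destruct (increment_partials f d1 d2 d3 P Hp HP (Hc1 P HP) (Hc2 P HP) (Hc3 P HP) e1 He1)
    as [dd [Hdd Hinc]].
  destruct (derivable_pt_lim_3 g1 g2 g3 l1 l2 l3 t0 e2 G1 G2 G3 He2) as [dg Hdg].
  (* increments of g below [m] keep g(t0 + h) in the half-space and within reach of [Hinc] *)
  set (m := Rmin dd (g3 t0 / 2)).
  assert (Hm1 := Rmin_l dd (g3 t0 / 2)). assert (Hm2 := Rmin_r dd (g3 t0 / 2)). fold m in Hm1, Hm2.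
  assert (Hdel : 0 < Rmin dg (m / (L + 1))).
  { apply Rmin_pos; [apply cond_pos | apply Rdiv_lt_0_compat; [unfold m; apply Rmin_pos |]; lra]. }
  exists (mkposreal _ Hdel). intros h Hh0 Hh. simpl in Hh.
  assert (Ha4 : Rabs h < m / (L + 1)) by (assert (h1 := Rmin_r dg (m / (L + 1))); lra).
  destruct (Hdg h Hh0 ltac:(assert (h1 := Rmin_l dg (m / (L + 1))); lra)) as [Dg1 [Dg2 Dg3]].
  assert (E1 := Rabs_increment_lt g1 t0 h l1 e2 m (L + 1) Hh0 ltac:(lra) He2a ltac:(lra) Dg1 Ha4).
  assert (E2 := Rabs_increment_lt g2 t0 h l2 e2 m (L + 1) Hh0 ltac:(lra) He2a ltac:(lra) Dg2 Ha4).
  assert (E3 := Rabs_increment_lt g3 t0 h l3 e2 m (L + 1) Hh0 ltac:(lra) He2a ltac:(lra) Dg3 Ha4).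
  set (Q := (g1 (t0 + h), g2 (t0 + h), g3 (t0 + h))).
  assert (HQ : inH3 Q) by (unfold Q, inH3, pz; simpl; apply Rabs_def2 in E3; lra).
  destruct (Hinc Q HQ) as [X1 [X2 [X3 [B1 [B2 [B3 E]]]]]]; try (unfold Q, P, px, py, pz; simpl; lra).
  rewrite E. unfold Q, P, px, py, pz; simpl; fold P.
  replace ((X1 * (g1 (t0 + h) - g1 t0) + X2 * (g2 (t0 + h) - g2 t0) + X3 * (g3 (t0 + h) - g3 t0)) / h)
    with (X1 * ((g1 (t0 + h) - g1 t0) / h) + X2 * ((g2 (t0 + h) - g2 t0) / h)
          + X3 * ((g3 (t0 + h) - g3 t0) / h)) by (field; exact Hh0).
  eapply Rle_lt_trans.
  { apply Rabs_dot3_sub_le with (e1 := e1) (e2 := e2); first [exact He2a | apply Rlt_le; assumption]. }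
  fold L D. apply eps_split_lt; lra.
Qed.

Definition in_box (lo hi p : pt) :=
  px lo <= px p <= px hi /\ py lo <= py p <= py hi /\ pz lo <= pz p <= pz hi.

Lemma fold_right_Rmax_ge {T : Type} (F : T -> R) (l : list T) t :
  List.In t l -> F t <= List.fold_right (fun t m => Rmax (F t) m) 0 l.
Proof.
  induction l as [|a l IH]; simpl; [tauto|]. intros [<-|Hi].
  - apply Rmax_l.
  - eapply Rle_trans; [apply IH; exact Hi| apply Rmax_r].
Qed.

(* Cousin's lemma on the box [lo, hi] (Coquelicot's [compactness_list]). *)
Lemma bounded_on_box (h : pt -> R) lo hi : 0 < pz lo ->
  (forall p, in_box lo hi p -> cube_cont_at h p) ->
  exists M, forall p, in_box lo hi p -> Rabs (h p) <= M.
Proof.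
  intros Hlo Hc.
  set (tp := fun t : Compactness.Tn 3 R => match t with (a, (b, (c, _))) => (a, b, c) end : pt).
  set (tn := fun p : pt => (px p, (py p, (pz p, tt))) : Compactness.Tn 3 R).
  assert (Hd : forall t : Compactness.Tn 3 R, exists d : posreal, in_box lo hi (tp t) ->
     forall q, inH3 q -> Rabs (px q - px (tp t)) < d -> Rabs (py q - py (tp t)) < d ->
     Rabs (pz q - pz (tp t)) < d -> Rabs (h q - h (tp t)) < 1).
  { intros t. destruct (classic (in_box lo hi (tp t))) as [Hb|Hb].
    - destruct (Hc _ Hb 1 Rlt_0_1) as [d [Hd Hq]]. exists (mkposreal d Hd). intros _. exact Hq.
    - exists (mkposreal 1 Rlt_0_1). intros Hb'; contradiction. }
  set (delta := fun t => proj1_sig (constructive_indefinite_description _ (Hd t))).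
  assert (Hdelta : forall t, in_box lo hi (tp t) ->
     forall q, inH3 q -> Rabs (px q - px (tp t)) < delta t -> Rabs (py q - py (tp t)) < delta t ->
     Rabs (pz q - pz (tp t)) < delta t -> Rabs (h q - h (tp t)) < 1).
  { intros t. unfold delta. destruct (constructive_indefinite_description _ (Hd t)). simpl. auto. }
  apply NNPP. intros Hn. apply (compactness_list 3 (tn lo) (tn hi) delta). intros [l Hl]. apply Hn.
  exists (List.fold_right (fun t m => Rmax (Rabs (h (tp t)) + 1) m) 0 l).
  intros p Hp. destruct (Hl (tn p)) as [t [Hin [Hbt Hct]]].
  { unfold tn, in_box in *; simpl. tauto. }
  assert (Hge := fold_right_Rmax_ge (fun t => Rabs (h (tp t)) + 1) l t Hin). cbv beta in Hge.
  assert (Hbt' : in_box lo hi (tp t)).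
  { destruct t as [a [b [c u]]]. unfold tn, in_box, tp in *; simpl in *. tauto. }
  assert (Hq : Rabs (h p - h (tp t)) < 1).
  { apply Hdelta; auto.
    - unfold inH3; unfold in_box in Hp; lra.
    - destruct t as [a [b [c u]]]; unfold tn, tp in *; simpl in *; tauto.
    - destruct t as [a [b [c u]]]; unfold tn, tp in *; simpl in *; tauto.
    - destruct t as [a [b [c u]]]; unfold tn, tp in *; simpl in *; tauto. }
  assert (hh := Rabs_triang_inv (h p) (h (tp t))). lra.
Qed.

(** * Geodesic polar coordinates *)

Lemma twoPI_ge0 : 0 <= 2 * PI.
Proof. assert (h := PI_RGT_0). lra. Qed.

Lemma RInt_cos_subst (F : R -> R) :
  (forall u, -1 <= u <= 1 -> continuous F u) ->
  RInt (fun y => sin y * F (cos y)) 0 PI = RInt F (-1) 1.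
Proof.
  intros HF.
  assert (H1 : forall y, Rmin 0 PI <= y <= Rmax 0 PI -> continuous F (cos y)).
  { intros y _. apply HF, COS_bound. }
  assert (H2 : forall y, Rmin 0 PI <= y <= Rmax 0 PI ->
            is_derive cos y (- sin y) /\ continuous (fun y => - sin y) y).
  { intros y _. split; [auto_derive; auto; ring | cont]. }
  assert (Hc := is_RInt_comp (V := R_CompleteNormedModule) F cos (fun y => - sin y) 0 PI H1 H2).
  rewrite cos_0, cos_PI in Hc.
  assert (HexF : ex_RInt F 1 (-1)).
  { apply ex_RInt_continuous_R. intros t Ht. apply HF. unfold Rmin, Rmax in Ht; destruct Rle_dec; lra. }
  rewrite <- (opp_RInt_swap F 1 (-1) HexF), <- (is_RInt_unique _ _ _ _ Hc).
  rewrite <- (RInt_opp (V := R_CompleteNormedModule)) by (eexists; exact Hc).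
  apply RInt_ext. intros y _. unfold opp, scal; simpl; unfold mult; simpl. ring.
Qed.

(* [geo_pt x r a ph] is exp_x(r n), where the unit vector n at x has polar angle [a] measured
   from the upward vertical and azimuth [ph]; in these coordinates dS = sinh^2 r sin a da dph
   (lemma [sphere_integral_polar]). *)
Definition geo_height (x : pt) r a := pz x / (cosh r - sinh r * cos a).

Definition geo_pt (x : pt) r a ph : pt :=
  (px x + geo_height x r a * sinh r * sin a * cos ph,
   py x + geo_height x r a * sinh r * sin a * sin ph,
   geo_height x r a).

Definition ring_integral (h : pt -> R) x r a : R := RInt (fun ph => h (geo_pt x r a ph)) 0 (2 * PI).

Definition polar_integral (h : pt -> R) x r : R := RInt (fun a => sin a * ring_integral h x r a) 0 PI.

Definition sphere_pt_cos (x : pt) r u ph : pt :=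
  (px x + pz x * sinh r * sqrt (1 - u ^ 2) * cos ph,
   py x + pz x * sinh r * sqrt (1 - u ^ 2) * sin ph,
   pz x * cosh r + pz x * sinh r * u).

Definition geo_pt_cos (x : pt) r v ph : pt :=
  (px x + (pz x / (cosh r - sinh r * v)) * sinh r * sqrt (1 - v ^ 2) * cos ph,
   py x + (pz x / (cosh r - sinh r * v)) * sinh r * sqrt (1 - v ^ 2) * sin ph,
   pz x / (cosh r - sinh r * v)).

Lemma geo_height_pos x r a : inH3 x -> 0 < geo_height x r a.
Proof. intros H; unfold geo_height; apply Rdiv_lt_0_compat; [exact H| apply cosh_sub_sinh_cos_pos]. Qed.

Lemma continuous_geo_pt h x r a ph : cube_cont h -> inH3 x ->
  continuous (fun q : R * R => h (geo_pt x r (fst q) (snd q))) (a, ph).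
Proof.
  intros Hh Hx. unfold geo_pt, geo_height. apply continuous_comp_cube_cont; auto; try cont.
  simpl. apply Rdiv_lt_0_compat; [exact Hx| apply cosh_sub_sinh_cos_pos].
Qed.

Lemma continuous_sphere_pt h x r th ph : cube_cont h -> inH3 x ->
  continuous (fun q : R * R => h (sphere_pt x r (fst q) (snd q))) (th, ph).
Proof.
  intros Hh Hx. unfold sphere_pt. apply continuous_comp_cube_cont; auto.
  - cont.
  - cont.
  - cont.
  - simpl. assert (0 < cosh r + sinh r * cos th) by (apply cosh_add_sinh_mul_pos; apply COS_bound).
    unfold inH3 in Hx. nra.
Qed.

Lemma continuous_sphere_pt_cos h x r u ph : cube_cont h -> inH3 x -> 0 < cosh r + sinh r * u ->
  continuous (fun q : R * R => h (sphere_pt_cos x r (fst q) (snd q))) (u, ph).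
Proof.
  intros Hh Hx Hu. unfold sphere_pt_cos. apply continuous_comp_cube_cont; auto.
  - cont.
  - cont.
  - cont.
  - simpl. unfold inH3 in Hx. nra.
Qed.

Lemma continuous_geo_pt_cos h x r v ph : cube_cont h -> inH3 x -> 0 < cosh r - sinh r * v ->
  continuous (fun q : R * R => h (geo_pt_cos x r (fst q) (snd q))) (v, ph).
Proof.
  intros Hh Hx Hv. unfold geo_pt_cos. apply continuous_comp_cube_cont; auto; try cont; simpl; try lra.
  apply Rdiv_lt_0_compat; auto.
Qed.

Lemma continuous_sphere_slice_integral h x r th : cube_cont h -> inH3 x ->
  continuous (fun t => RInt (fun ph => h (sphere_pt x r t ph)) 0 (2 * PI)) th.
Proof.
  intros Hh Hx. apply (continuous_RInt_param_R (fun t ph => h (sphere_pt x r t ph))); [apply twoPI_ge0|].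
  apply filter_forall. intros y t _. apply continuous_sphere_pt; auto.
Qed.

Lemma sphere_integral_iterated h x r : cube_cont h -> inH3 x ->
  sphere_integral h x r
  = RInt (fun th => sphere_density r th * RInt (fun ph => h (sphere_pt x r th ph)) 0 (2 * PI)) 0 PI.
Proof.
  intros Hh Hx. unfold sphere_integral.
  assert (Hex : forall th, ex_RInt (fun ph => h (sphere_pt x r th ph)) 0 (2 * PI)).
  { intros th. apply (ex_RInt_joint_continuous (fun t ph => h (sphere_pt x r t ph))); [apply twoPI_ge0|].
    intros t _. apply continuous_sphere_pt; auto. }
  assert (E : (fun th => Defs.RInt (fun ph => h (sphere_pt x r th ph) * sphere_density r th) 0 (2 * PI)) =
              (fun th => sphere_density r th * RInt (fun ph => h (sphere_pt x r th ph)) 0 (2 * PI))).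
  { apply functional_extensionality; intros th. rewrite Defs_RInt_eq.
    - apply RInt_Rmult_r. apply Hex.
    - apply ex_RInt_continuous_R. intros t _. apply cont_mult.
      + apply (continuous_slice (fun t ph => h (sphere_pt x r t ph))). apply continuous_sphere_pt; auto.
      + apply cont_const. }
  rewrite E. apply Defs_RInt_eq. apply ex_RInt_continuous_R. intros t _. apply cont_mult.
  - unfold sphere_density. cont.
    apply pow_nonzero, Rgt_not_eq, cosh_add_sinh_mul_pos, COS_bound.
  - apply continuous_sphere_slice_integral; auto.
Qed.

Definition sphere_ring (h : pt -> R) x r u : R := RInt (fun ph => h (sphere_pt_cos x r u ph)) 0 (2 * PI).
Definition sphere_ring_weighted (h : pt -> R) x r u : R :=
  sinh r ^ 2 / (cosh r + sinh r * u) ^ 2 * sphere_ring h x r u.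
Definition geo_ring (h : pt -> R) x r v : R := RInt (fun ph => h (geo_pt_cos x r v ph)) 0 (2 * PI).

Lemma continuous_sphere_ring h x r u : cube_cont h -> inH3 x -> 0 < cosh r + sinh r * u ->
  continuous (sphere_ring h x r) u.
Proof.
  intros Hh Hx Hu.
  apply (continuous_RInt_param_R (fun u ph => h (sphere_pt_cos x r u ph))); [apply twoPI_ge0|].
  assert (Hl := continuous_locally_pos (fun u => cosh r + sinh r * u) u). cbv beta in Hl.
  assert (Hc : continuous (fun u => cosh r + sinh r * u) u) by cont.
  specialize (Hl Hc Hu). revert Hl. apply filter_imp. intros y Hy t _. apply continuous_sphere_pt_cos; auto.
Qed.

Lemma continuous_sphere_ring_weighted h x r u : cube_cont h -> inH3 x -> 0 < cosh r + sinh r * u ->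
  continuous (sphere_ring_weighted h x r) u.
Proof.
  intros Hh Hx Hu. unfold sphere_ring_weighted.
  apply (cont_mult (fun u => sinh r ^ 2 / (cosh r + sinh r * u) ^ 2) (sphere_ring h x r)).
  - cont. apply pow_nonzero. lra.
  - apply continuous_sphere_ring; auto.
Qed.

Lemma continuous_geo_ring h x r v : cube_cont h -> inH3 x -> 0 < cosh r - sinh r * v ->
  continuous (geo_ring h x r) v.
Proof.
  intros Hh Hx Hu.
  apply (continuous_RInt_param_R (fun v ph => h (geo_pt_cos x r v ph))); [apply twoPI_ge0|].
  assert (Hl := continuous_locally_pos (fun v => cosh r - sinh r * v) v). cbv beta in Hl.
  assert (Hc : continuous (fun v => cosh r - sinh r * v) v) by cont.
  specialize (Hl Hc Hu). revert Hl. apply filter_imp. intros y Hy t _. apply continuous_geo_pt_cos; auto.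
Qed.

Lemma sphere_integral_cos_subst h x r : cube_cont h -> inH3 x ->
  RInt (fun th => sphere_density r th * RInt (fun ph => h (sphere_pt x r th ph)) 0 (2 * PI)) 0 PI
  = RInt (sphere_ring_weighted h x r) (-1) 1.
Proof.
  intros Hh Hx. rewrite <- RInt_cos_subst.
  2:{ intros u Hu. apply continuous_sphere_ring_weighted; auto. apply cosh_add_sinh_mul_pos; auto. }
  apply RInt_ext. intros y Hy. rewrite Rmin_left, Rmax_right in Hy by (assert (h0 := PI_RGT_0); lra).
  unfold sphere_ring_weighted, sphere_ring, sphere_density.
  assert (E : (fun ph => h (sphere_pt x r y ph)) = (fun ph => h (sphere_pt_cos x r (cos y) ph))).
  { apply functional_extensionality. intros ph. unfold sphere_pt, sphere_pt_cos.
    rewrite sin_sqrt by lra. reflexivity. }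
  rewrite E. assert (0 < cosh r + sinh r * cos y) by (apply cosh_add_sinh_mul_pos, COS_bound).
  match goal with |- ?a = ?b => change (@eq R a b) end. field. lra.
Qed.

(* [sphere_pt_cos x r (mobius r (cos a)) = geo_pt_cos x r (cos a)]: the cosine of the polar angle
   at the Euclidean centre of S_r(x) as a function of that of the polar angle at x. *)
Definition mobius r v := (cosh r * v - sinh r) / (cosh r - sinh r * v).

Lemma mobius_range r v : -1 <= v <= 1 -> -1 <= mobius r v <= 1.
Proof.
  intros Hv. assert (Hp := cosh_sub_sinh_mul_pos r v Hv). unfold mobius.
  assert (h1 : 0 < cosh r - sinh r) by (rewrite cosh_sub_sinh; apply exp_pos).
  assert (h2 : 0 < cosh r + sinh r) by (rewrite cosh_add_sinh; apply exp_pos).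
  split.
  - apply Rmult_le_reg_r with (cosh r - sinh r * v); auto. unfold Rdiv.
    rewrite Rmult_assoc, Rinv_l by lra. nra.
  - apply Rmult_le_reg_r with (cosh r - sinh r * v); auto. unfold Rdiv.
    rewrite Rmult_assoc, Rinv_l by lra. nra.
Qed.

Lemma cosh_add_sinh_mobius r v : -1 <= v <= 1 -> cosh r + sinh r * mobius r v = / (cosh r - sinh r * v).
Proof.
  intros Hv. assert (Hp := cosh_sub_sinh_mul_pos r v Hv). assert (Hcs := cosh_sqr_sub_sinh_sqr r).
  unfold mobius.
  replace (cosh r + sinh r * ((cosh r * v - sinh r) / (cosh r - sinh r * v)))
    with ((cosh r ^ 2 - sinh r ^ 2) / (cosh r - sinh r * v)) by (field; lra).
  rewrite Hcs. field. lra.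
Qed.

Lemma sphere_pt_cos_mobius x r v ph :
  -1 <= v <= 1 -> sphere_pt_cos x r (mobius r v) ph = geo_pt_cos x r v ph.
Proof.
  intros Hv. assert (Hp := cosh_sub_sinh_mul_pos r v Hv). assert (Hcs := cosh_sqr_sub_sinh_sqr r).
  assert (Hsq : sqrt (1 - mobius r v ^ 2) = sqrt (1 - v ^ 2) / (cosh r - sinh r * v)).
  { assert (E : 1 - mobius r v ^ 2 = (1 - v^2) / (cosh r - sinh r * v) ^ 2).
    { unfold mobius. replace (1 - v^2) with ((cosh r ^ 2 - sinh r ^ 2) * (1 - v^2)) by (rewrite Hcs; ring).
      field. lra. }
    rewrite E. assert (0 <= 1 - v^2) by nra.
    rewrite sqrt_div_alt by (apply pow_lt; lra). rewrite sqrt_pow2 by lra. reflexivity. }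
  unfold sphere_pt_cos, geo_pt_cos. rewrite Hsq.
  assert (E3 : pz x * cosh r + pz x * sinh r * mobius r v = pz x / (cosh r - sinh r * v)).
  { replace (pz x * cosh r + pz x * sinh r * mobius r v)
      with (pz x * (cosh r + sinh r * mobius r v)) by ring.
    rewrite cosh_add_sinh_mobius by auto. field. lra. }
  rewrite E3.
  replace (pz x * sinh r * (sqrt (1 - v^2) / (cosh r - sinh r * v)))
    with (pz x / (cosh r - sinh r * v) * sinh r * sqrt (1 - v ^ 2)) by (field; lra).
  reflexivity.
Qed.

Lemma sphere_ring_mobius_subst h x r : cube_cont h -> inH3 x ->
  RInt (sphere_ring_weighted h x r) (-1) 1 = sinh r ^ 2 * RInt (geo_ring h x r) (-1) 1.
Proof.
  intros Hh Hx.
  assert (HK : forall u, -1 <= u <= 1 -> continuous (sphere_ring_weighted h x r) u).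
  { intros u Hu. apply continuous_sphere_ring_weighted; auto. apply cosh_add_sinh_mul_pos; auto. }
  assert (Hr : forall y, Rmin (-1) 1 <= y <= Rmax (-1) 1 -> -1 <= y <= 1).
  { intros y Hy. rewrite Rmin_left, Rmax_right in Hy by lra. exact Hy. }
  assert (H1 : forall y, Rmin (-1) 1 <= y <= Rmax (-1) 1 ->
            continuous (sphere_ring_weighted h x r) (mobius r y)).
  { intros y Hy. apply HK. apply mobius_range. auto. }
  assert (H2 : forall y, Rmin (-1) 1 <= y <= Rmax (-1) 1 ->
     is_derive (mobius r) y (/ (cosh r - sinh r * y) ^ 2) /\
     continuous (fun y => / (cosh r - sinh r * y) ^ 2) y).
  { intros y Hy. apply Hr in Hy. assert (Hp := cosh_sub_sinh_mul_pos r y Hy).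
    assert (Hcs := cosh_sqr_sub_sinh_sqr r). split.
    - unfold mobius. auto_derive; [lra|].
      replace (/ (cosh r - sinh r * y) ^ 2) with ((cosh r ^ 2 - sinh r ^ 2) / (cosh r - sinh r * y) ^ 2)
        by (rewrite Hcs; field; lra).
      field. lra.
    - apply cont_inv; [cont| apply pow_nonzero; lra]. }
  assert (Hc := RInt_comp (V := R_CompleteNormedModule) (sphere_ring_weighted h x r) (mobius r) _
                 (-1) 1 H1 H2).
  assert (Em1 : mobius r (-1) = -1).
  { unfold mobius. assert (0 < cosh r + sinh r) by (rewrite cosh_add_sinh; apply exp_pos).
    replace (cosh r * -1 - sinh r) with (- (cosh r - sinh r * -1)) by ring. field. lra. }
  assert (Ep1 : mobius r 1 = 1).
  { unfold mobius. assert (0 < cosh r - sinh r) by (rewrite cosh_sub_sinh; apply exp_pos).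
    replace (cosh r * 1 - sinh r) with (cosh r - sinh r * 1) by ring. field. lra. }
  rewrite Em1, Ep1 in Hc. rewrite <- Hc.
  rewrite <- RInt_Rmult_l.
  - apply RInt_ext. intros v Hv. rewrite Rmin_left, Rmax_right in Hv by lra.
    unfold scal; simpl; unfold mult; simpl. unfold sphere_ring_weighted.
    rewrite cosh_add_sinh_mobius by lra.
    unfold sphere_ring, geo_ring.
    assert (E : (fun ph => h (sphere_pt_cos x r (mobius r v) ph)) = (fun ph => h (geo_pt_cos x r v ph))).
    { apply functional_extensionality; intros ph. rewrite sphere_pt_cos_mobius by lra. reflexivity. }
    rewrite E. assert (Hp := cosh_sub_sinh_mul_pos r v ltac:(lra)).
    field. lra.
  - apply ex_RInt_continuous_R. intros t Ht. apply continuous_geo_ring; auto.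
    apply cosh_sub_sinh_mul_pos. apply Hr; exact Ht.
Qed.

Lemma continuous_ring_integral h x r a : cube_cont h -> inH3 x -> continuous (ring_integral h x r) a.
Proof.
  intros Hh Hx. apply (continuous_RInt_param_R (fun a ph => h (geo_pt x r a ph))); [apply twoPI_ge0|].
  apply filter_forall. intros y t _. apply continuous_geo_pt; auto.
Qed.

Lemma geo_ring_cos_subst h x r : cube_cont h -> inH3 x ->
  RInt (geo_ring h x r) (-1) 1 = polar_integral h x r.
Proof.
  intros Hh Hx. rewrite <- RInt_cos_subst.
  2:{ intros v Hv. apply continuous_geo_ring; auto. apply cosh_sub_sinh_mul_pos; auto. }
  unfold polar_integral. apply RInt_ext. intros y Hy.
  rewrite Rmin_left, Rmax_right in Hy by (assert (h0 := PI_RGT_0); lra).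
  unfold geo_ring, ring_integral.
  assert (E : (fun ph => h (geo_pt_cos x r (cos y) ph)) = (fun ph => h (geo_pt x r y ph))).
  { apply functional_extensionality. intros ph. unfold geo_pt_cos, geo_pt, geo_height.
    rewrite sin_sqrt by lra. reflexivity. }
  rewrite E. reflexivity.
Qed.

Lemma sphere_integral_polar h x r : cube_cont h -> inH3 x ->
  sphere_integral h x r = sinh r ^ 2 * polar_integral h x r.
Proof.
  intros Hh Hx.
  rewrite sphere_integral_iterated, sphere_integral_cos_subst, sphere_ring_mobius_subst,
    geo_ring_cos_subst by auto.
  reflexivity.
Qed.

(** * The radial derivative *)

Definition geo_weight (x : pt) r a := pz x / (cosh r - sinh r * cos a) ^ 2.

Definition radial_deriv (d1 d2 d3 : pt -> R) x r a ph :=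
  d1 (geo_pt x r a ph) * (geo_weight x r a * sin a * cos ph)
  + d2 (geo_pt x r a ph) * (geo_weight x r a * sin a * sin ph)
  + d3 (geo_pt x r a ph) * (- geo_weight x r a * (sinh r - cosh r * cos a)).

Definition polar_integral_deriv d1 d2 d3 x r :=
  RInt (fun a => sin a * RInt (fun ph => radial_deriv d1 d2 d3 x r a ph) 0 (2 * PI)) 0 PI.

Lemma derivable_geo_pt_x x r a ph :
  derivable_pt_lim (fun t => px x + geo_height x t a * sinh t * sin a * cos ph) r
    (geo_weight x r a * sin a * cos ph).
Proof.
  apply is_derive_Reals. assert (Hp := cosh_sub_sinh_cos_pos r a).
  unfold geo_height, geo_weight. unfold cosh, sinh in *. auto_derive; [lra | exp_field r a].
Qed.

Lemma derivable_geo_pt_y x r a ph :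
  derivable_pt_lim (fun t => py x + geo_height x t a * sinh t * sin a * sin ph) r
    (geo_weight x r a * sin a * sin ph).
Proof.
  apply is_derive_Reals. assert (Hp := cosh_sub_sinh_cos_pos r a).
  unfold geo_height, geo_weight. unfold cosh, sinh in *. auto_derive; [lra | exp_field r a].
Qed.

Lemma derivable_geo_pt_z x r a :
  derivable_pt_lim (fun t => geo_height x t a) r (- geo_weight x r a * (sinh r - cosh r * cos a)).
Proof.
  apply is_derive_Reals. assert (Hp := cosh_sub_sinh_cos_pos r a).
  unfold geo_height, geo_weight. unfold cosh, sinh in *. auto_derive; [lra | exp_field r a].
Qed.

(* r |-> geo_pt x r a ph has unit hyperbolic speed: its Euclidean speed is its height. *)
Lemma geo_velocity_sqr x r a ph :
  (geo_weight x r a * sin a * cos ph) ^ 2 + (geo_weight x r a * sin a * sin ph) ^ 2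
  + (- geo_weight x r a * (sinh r - cosh r * cos a)) ^ 2 = geo_height x r a ^ 2.
Proof.
  assert (Hph := sin2_cos2 ph). assert (Ha := sin2_cos2 a). unfold Rsqr in Hph, Ha.
  replace ((geo_weight x r a * sin a * cos ph) ^ 2 + (geo_weight x r a * sin a * sin ph) ^ 2
           + (- geo_weight x r a * (sinh r - cosh r * cos a)) ^ 2)
    with (geo_weight x r a ^ 2 * (sin a * sin a * (sin ph * sin ph + cos ph * cos ph)
                                  + (sinh r - cosh r * cos a) ^ 2)) by ring.
  rewrite Hph. replace (sin a * sin a * 1) with (1 - cos a * cos a) by lra.
  assert (Hp := cosh_sub_sinh_cos_pos r a).
  unfold geo_weight, geo_height. exp_field r a.
Qed.

Lemma geo_pt_periodic x r a ph : geo_pt x r a (ph + 2 * PI) = geo_pt x r a ph.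
Proof. unfold geo_pt. rewrite cos_plus_2PI, sin_plus_2PI. reflexivity. Qed.

Lemma radial_deriv_periodic d1 d2 d3 x r a ph :
  radial_deriv d1 d2 d3 x r a (ph + 2 * PI) = radial_deriv d1 d2 d3 x r a ph.
Proof. unfold radial_deriv. rewrite geo_pt_periodic, cos_plus_2PI, sin_plus_2PI. reflexivity. Qed.

Section RadialDerivative.

Variables (f d1 d2 d3 : pt -> R) (x : pt).
Hypotheses (Hp : has_partials f d1 d2 d3) (Hd1 : cube_cont d1) (Hd2 : cube_cont d2)
  (Hd3 : cube_cont d3) (Hx : inH3 x).

Lemma is_derive_geo_pt_comp r a ph :
  is_derive (fun t => f (geo_pt x t a ph)) r (radial_deriv d1 d2 d3 x r a ph).
Proof.
  apply is_derive_Reals.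
  apply (derivable_pt_lim_comp_partials f d1 d2 d3
           (fun t => px x + geo_height x t a * sinh t * sin a * cos ph)
           (fun t => py x + geo_height x t a * sinh t * sin a * sin ph) (fun t => geo_height x t a));
    auto.
  - apply derivable_geo_pt_x.
  - apply derivable_geo_pt_y.
  - apply derivable_geo_pt_z.
  - apply geo_height_pos; auto.
Qed.

Lemma continuous_radial_deriv q :
  continuous (fun q : (R * R) * R => radial_deriv d1 d2 d3 x (fst (fst q)) (snd (fst q)) (snd q)) q.
Proof.
  destruct q as [[r a] ph]. unfold radial_deriv, geo_weight.
  assert (Hd : forall d, cube_cont d ->
            continuous (fun q : (R * R) * R => d (geo_pt x (fst (fst q)) (snd (fst q)) (snd q)))
              ((r, a), ph)).
  { intros d Hd. unfold geo_pt, geo_height. apply continuous_comp_cube_cont; auto; try cont.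
    cbn [fst snd]. apply Rdiv_lt_0_compat; [exact Hx | apply cosh_sub_sinh_cos_pos]. }
  apply cont_plus; [apply cont_plus|]; apply cont_mult; try apply Hd; auto; cont;
    apply pow_nonzero, Rgt_not_eq, cosh_sub_sinh_cos_pos.
Qed.

Lemma continuous_radial_deriv_r_ph a r ph :
  continuous (fun q : R * R => radial_deriv d1 d2 d3 x (fst q) a (snd q)) (r, ph).
Proof.
  apply (continuous_comp (fun q : R * R => ((fst q, a), snd q))
           (fun q : (R * R) * R => radial_deriv d1 d2 d3 x (fst (fst q)) (snd (fst q)) (snd q))).
  - apply (continuous_comp_2 (fun q : R * R => (fst q, a)) snd pair).
    + apply (continuous_comp_2 fst (fun _ => a) pair); [apply cont_fst | apply cont_const |].
      apply continuous_pair_id.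
    + apply cont_snd.
    + apply continuous_pair_id.
  - apply continuous_radial_deriv.
Qed.

Lemma continuous_radial_deriv_a_ph r a ph :
  continuous (fun q : R * R => radial_deriv d1 d2 d3 x r (fst q) (snd q)) (a, ph).
Proof.
  apply (continuous_comp (fun q : R * R => ((r, fst q), snd q))
           (fun q : (R * R) * R => radial_deriv d1 d2 d3 x (fst (fst q)) (snd (fst q)) (snd q))).
  - apply (continuous_comp_2 (fun q : R * R => (r, fst q)) snd pair).
    + apply (continuous_comp_2 (fun _ => r) fst pair); [apply cont_const | apply cont_fst |].
      apply continuous_pair_id.
    + apply cont_snd.
    + apply continuous_pair_id.
  - apply continuous_radial_deriv.
Qed.

Lemma is_derive_ring_integral a r :
  is_derive (fun r => ring_integral f x r a) r
    (RInt (fun ph => radial_deriv d1 d2 d3 x r a ph) 0 (2 * PI)).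
Proof.
  assert (Hf := partials_cube_cont f d1 d2 d3 Hp Hd1 Hd2 Hd3).
  assert (HD : forall u v, Derive (fun z => f (geo_pt x z a v)) u = radial_deriv d1 d2 d3 x u a v).
  { intros u v. apply is_derive_unique. apply is_derive_geo_pt_comp. }
  replace (RInt (fun ph => radial_deriv d1 d2 d3 x r a ph) 0 (2 * PI))
    with (RInt (fun t => Derive (fun u => f (geo_pt x u a t)) r) 0 (2 * PI))
    by (apply RInt_ext; intros t _; apply HD).
  unfold ring_integral. apply (is_derive_RInt_param (fun u ph => f (geo_pt x u a ph))).
  - apply filter_forall. intros y t0 _. exists (radial_deriv d1 d2 d3 x y a t0).
    apply is_derive_geo_pt_comp.
  - intros t _. cbv beta.
    replace (fun u v => Derive (fun z => f (geo_pt x z a v)) u)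
      with (fun u v => radial_deriv d1 d2 d3 x u a v)
      by (apply functional_extensionality; intros u;
          apply functional_extensionality; intros v; symmetry; apply HD).
    apply continuity_2d_pt_filterlim. apply continuous_radial_deriv_r_ph.
  - apply filter_forall. intros y. apply ex_RInt_continuous_R. intros t _.
    apply (continuous_slice (fun a0 ph => f (geo_pt x y a0 ph)) a t). apply continuous_geo_pt; auto.
Qed.

Lemma is_derive_polar_integral r :
  is_derive (polar_integral f x) r (polar_integral_deriv d1 d2 d3 x r).
Proof.
  assert (Hf := partials_cube_cont f d1 d2 d3 Hp Hd1 Hd2 Hd3).
  set (G := fun u a => sin a * RInt (fun ph => radial_deriv d1 d2 d3 x u a ph) 0 (2 * PI)).
  assert (HD : forall u v, Derive (fun z => sin v * ring_integral f x z v) u = G u v).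
  { intros u v. apply is_derive_unique. apply is_derive_scal. apply is_derive_ring_integral. }
  unfold polar_integral_deriv. fold (G r).
  replace (RInt (G r) 0 PI) with (RInt (fun t => Derive (fun u => sin t * ring_integral f x u t) r) 0 PI)
    by (apply RInt_ext; intros t _; apply HD).
  unfold polar_integral. apply (is_derive_RInt_param (fun u a => sin a * ring_integral f x u a)).
  - apply filter_forall. intros y t0 _. apply ex_derive_scal. eexists. apply is_derive_ring_integral.
  - intros t _. cbv beta.
    replace (fun u v => Derive (fun z => sin v * ring_integral f x z v) u) with G
      by (apply functional_extensionality; intros u;
          apply functional_extensionality; intros v; symmetry; apply HD).
    apply continuity_2d_pt_filterlim. unfold G.
    apply (cont_mult (fun z : R * R => sin (snd z))
             (fun z => RInt (fun ph => radial_deriv d1 d2 d3 x (fst z) (snd z) ph) 0 (2 * PI)));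
      [cont |].
    apply (continuous_RInt_param (fun (p : R * R) ph => radial_deriv d1 d2 d3 x (fst p) (snd p) ph));
      [apply twoPI_ge0 | intros ph _; apply continuous_radial_deriv |].
    apply filter_forall. intros p ph _.
    apply (continuous_slice (fun (p : R * R) ph => radial_deriv d1 d2 d3 x (fst p) (snd p) ph)).
    apply continuous_radial_deriv.
  - apply filter_forall. intros y. apply ex_RInt_continuous_R. intros t _.
    apply cont_mult; [cont | apply continuous_ring_integral; auto].
Qed.

End RadialDerivative.

Lemma radial_deriv_bound d1 d2 d3 x r a ph Md B : inH3 x ->
  Rabs (d1 (geo_pt x r a ph)) <= Md -> Rabs (d2 (geo_pt x r a ph)) <= Md ->
  Rabs (d3 (geo_pt x r a ph)) <= Md ->
  geo_height x r a <= B -> Rabs (radial_deriv d1 d2 d3 x r a ph) <= 3 * Md * B.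
Proof.
  intros Hx H1 H2 H3 HB. assert (HY := geo_height_pos x r a Hx).
  assert (Hsq := geo_velocity_sqr x r a ph).
  assert (h1 := pow2_ge_0 (geo_weight x r a * sin a * cos ph)).
  assert (h2 := pow2_ge_0 (geo_weight x r a * sin a * sin ph)).
  assert (h3 := pow2_ge_0 (- geo_weight x r a * (sinh r - cosh r * cos a))).
  assert (HMd : 0 <= Md) by (assert (h := Rabs_pos (d1 (geo_pt x r a ph))); lra).
  assert (Hterm : forall D v, Rabs D <= Md -> v ^ 2 <= B ^ 2 -> Rabs (D * v) <= Md * B).
  { intros D v HD Hv. rewrite Rabs_mult.
    apply Rmult_le_compat; try apply Rabs_pos; [exact HD | apply Rabs_le_sqr; lra]. }
  unfold radial_deriv.
  eapply Rle_trans; [apply Rabs_triang|].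
  eapply Rle_trans; [apply Rplus_le_compat_r; apply Rabs_triang|].
  assert (T1 := Hterm _ (geo_weight x r a * sin a * cos ph) H1 ltac:(nra)).
  assert (T2 := Hterm _ (geo_weight x r a * sin a * sin ph) H2 ltac:(nra)).
  assert (T3 := Hterm _ (- geo_weight x r a * (sinh r - cosh r * cos a)) H3 ltac:(nra)).
  lra.
Qed.

(** * Integrals over a small cap of directions *)

Lemma abs_RInt_period_le (k : R -> R) M :
  (forall t, continuous k t) -> (forall t, Rabs (k t) <= M) ->
  Rabs (RInt k 0 (2 * PI)) <= 2 * PI * M.
Proof.
  intros Hc Hb. assert (h0 := PI_RGT_0).
  replace (2 * PI * M) with ((2 * PI - 0) * M) by ring.
  apply abs_RInt_le_const; [lra | | auto].
  apply ex_RInt_continuous_R. intros; auto.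
Qed.

Lemma abs_RInt_periodic_local_support (k : R -> R) pb d M :
  (forall t, continuous k t) -> (forall t, k (t + 2 * PI) = k t) ->
  0 <= d -> (forall t, Rabs (k t) <= M) ->
  (forall t, pb - PI <= t <= pb + PI -> d < Rabs (t - pb) -> k t = 0) ->
  Rabs (RInt k 0 (2 * PI)) <= 2 * d * M.
Proof.
  intros Hc Hp Hd Hb Hz. rewrite <- (RInt_periodic_shift k (pb - PI)) by auto.
  assert (h0 := PI_RGT_0).
  apply abs_RInt_le_local_support with (t0 := pb); auto; try lra.
  intros t Ht. apply Hz. lra.
Qed.

(* Spherical law of cosines for the unit vectors of polar coordinates (a, ph) and (ab, pb). *)
Lemma one_sub_dot_polar a ph ab pb :
  1 - (sin ab * cos pb * (sin a * cos ph) + sin ab * sin pb * (sin a * sin ph) + cos ab * cos a)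
  = (1 - cos (a - ab)) + sin a * sin ab * (1 - cos (ph - pb)).
Proof. rewrite !cos_minus. ring. Qed.

Lemma abs_sin_RInt_ring_near_pole (k : R -> R) a ab M s :
  0 <= a <= PI -> 0 <= ab <= PI -> 0 <= s ->
  (forall t, continuous k t) -> (forall t, Rabs (k t) <= M) ->
  2 * sin ab < sin a -> Rabs (a - ab) <= 5 * s ->
  Rabs (sin a * RInt k 0 (2 * PI)) <= 100 * s * M.
Proof.
  intros Ha Hab Hs0 Hc Hb Hbig Hd.
  assert (hPI := PI_RGT_0). assert (hPI4 := PI_4).
  assert (HM : 0 <= M) by (specialize (Hb 0); assert (h := Rabs_pos (k 0)); lra).
  assert (Hsab : 0 <= sin ab) by (apply sin_ge_0; lra).
  assert (Hsl := sin_lipschitz a ab). rewrite Rabs_right in Hsl by lra.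
  assert (Hsa : sin a <= 10 * s) by lra.
  assert (Htriv := abs_RInt_period_le k M Hc Hb).
  rewrite Rabs_mult, (Rabs_right (sin a)) by lra.
  apply Rle_trans with (sin a * (2 * PI * M)); [apply Rmult_le_compat_l; lra|].
  assert (sin a * (2 * PI * M) <= (10 * s) * (2 * 4 * M)) by (apply Rmult_le_compat; nra).
  nra.
Qed.

(* Away from the poles the azimuthal length of the ring is O(sqrt (eta / (sin a sin ab))). *)
Lemma abs_sin_RInt_ring_off_pole (k : R -> R) a ab pb eta M :
  0 <= a <= PI -> 0 <= ab <= PI -> 0 <= eta ->
  (forall t, continuous k t) -> (forall t, k (t + 2 * PI) = k t) -> (forall t, Rabs (k t) <= M) ->
  (forall ph, k ph <> 0 -> (1 - cos (a - ab)) + sin a * sin ab * (1 - cos (ph - pb)) <= eta) ->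
  sin a <= 2 * sin ab ->
  Rabs (sin a * RInt k 0 (2 * PI)) <= 16 * sqrt eta * M.
Proof.
  intros Ha Hab Heta Hc Hp Hb Hcap Hsmall.
  assert (hPI := PI_RGT_0).
  assert (HM : 0 <= M) by (specialize (Hb 0); assert (h := Rabs_pos (k 0)); lra).
  assert (Hs0 := sqrt_pos eta). assert (Hss : sqrt eta * sqrt eta = eta) by (apply sqrt_sqrt; auto).
  assert (Hsa : 0 <= sin a) by (apply sin_ge_0; lra).
  rewrite Rabs_mult, (Rabs_right (sin a)) by lra.
  destruct (Req_dec (sin a) 0) as [Z|Z].
  { rewrite Z, Rmult_0_l. apply Rmult_le_pos; [|lra]. apply Rmult_le_pos; lra. }
  assert (Hsap : 0 < sin a) by lra. assert (Hsabp : 0 < sin ab) by lra.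
  set (kap := sin a * sin ab).
  assert (Hkap : 0 < kap) by (unfold kap; nra).
  assert (Hek : 0 <= eta / kap) by (apply Rmult_le_pos; [lra | left; apply Rinv_0_lt_compat; lra]).
  set (dph := 5 * sqrt (eta / kap)).
  assert (Hdph0 : 0 <= dph) by (unfold dph; assert (h1 := sqrt_pos (eta / kap)); lra).
  assert (Hin : Rabs (RInt k 0 (2 * PI)) <= 2 * dph * M).
  { apply abs_RInt_periodic_local_support with (pb := pb); auto.
    intros t Ht Htd. apply NNPP. intro Hn. apply Hcap in Hn.
    assert (0 <= 1 - cos (a - ab)) by (assert (h1 := COS_bound (a - ab)); lra).
    assert (Hq : 1 - cos (t - pb) <= eta / kap).
    { apply Rmult_le_reg_l with kap; auto. replace (kap * (eta / kap)) with eta by (field; lra).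
      unfold kap. lra. }
    assert (Rabs (t - pb) <= dph) by (apply Rabs_le_of_1_minus_cos; auto; apply Rabs_le; lra).
    lra. }
  assert (Hsd : sin a * dph <= 8 * sqrt eta).
  { apply Rle_trans with (Rabs (sin a * dph)); [apply Rle_abs|].
    apply Rabs_le_sqr; [lra|].
    replace ((sin a * dph) ^ 2) with (25 * eta * (sin a / sin ab)).
    2:{ unfold dph.
        replace ((sin a * (5 * sqrt (eta / kap))) ^ 2)
          with (25 * sin a ^ 2 * (sqrt (eta / kap) ^ 2)) by ring.
        rewrite pow2_sqrt by exact Hek. unfold kap. field. lra. }
    replace ((8 * sqrt eta) ^ 2) with (64 * (sqrt eta * sqrt eta)) by ring. rewrite Hss.
    assert (sin a / sin ab <= 2) by (apply Rle_div_l; lra).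
    nra. }
  apply Rle_trans with (sin a * (2 * dph * M)); [apply Rmult_le_compat_l; auto|].
  replace (sin a * (2 * dph * M)) with (2 * M * (sin a * dph)) by ring.
  assert (2 * M * (sin a * dph) <= 2 * M * (8 * sqrt eta)) by (apply Rmult_le_compat_l; lra).
  nra.
Qed.

Lemma abs_RInt_cap_le (h : R -> R -> R) ab pb eta M :
  0 <= ab <= PI -> 0 <= eta ->
  (forall a ph, joint_continuous h a ph) -> (forall a ph, h a (ph + 2 * PI) = h a ph) ->
  (forall a ph, Rabs (h a ph) <= M) ->
  (forall a ph, h a ph <> 0 -> (1 - cos (a - ab)) + sin a * sin ab * (1 - cos (ph - pb)) <= eta) ->
  Rabs (RInt (fun a => sin a * RInt (h a) 0 (2 * PI)) 0 PI) <= 1000 * eta * M.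
Proof.
  intros Hab Heta HJ Hper Hb Hcap.
  assert (hPI := PI_RGT_0).
  assert (HM : 0 <= M) by (specialize (Hb 0 0); assert (h0 := Rabs_pos (h 0 0)); lra).
  set (s := sqrt eta).
  assert (Hs0 : 0 <= s) by apply sqrt_pos. assert (Hss : s * s = eta) by (apply sqrt_sqrt; auto).
  assert (Hout : forall a, 0 <= a <= PI -> 5 * s < Rabs (a - ab) -> forall ph, h a ph = 0).
  { intros a Ha Hd ph. apply NNPP. intro Hn. apply Hcap in Hn.
    assert (0 <= 1 - cos (ph - pb)) by (assert (h1 := COS_bound (ph - pb)); lra).
    assert (0 <= sin a) by (apply sin_ge_0; lra). assert (0 <= sin ab) by (apply sin_ge_0; lra).
    assert (0 <= sin a * sin ab * (1 - cos (ph - pb))) by (apply Rmult_le_pos; [apply Rmult_le_pos|]; lra).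
    assert (Rabs (a - ab) <= 5 * s) by (apply Rabs_le_of_1_minus_cos; [apply Rabs_le; lra | auto | lra]).
    lra. }
  replace (1000 * eta * M) with (2 * (5 * s) * (100 * s * M)) by (rewrite <- Hss; ring).
  apply abs_RInt_le_local_support with (t0 := ab); try lra.
  - intros a _. apply (cont_mult (fun a => sin a) (fun a => RInt (h a) 0 (2 * PI))); [apply continuous_sin|].
    apply continuous_RInt_param_R; [apply twoPI_ge0|]. apply filter_forall. intros; apply HJ.
  - intros a Ha. destruct (Rle_dec (Rabs (a - ab)) (5 * s)) as [Hin | Hfar].
    + assert (Hk : forall ph, continuous (h a) ph) by (intros ph; apply continuous_slice, HJ).
      destruct (Rlt_dec (2 * sin ab) (sin a)) as [Hbig | Hsmall].
      * apply abs_sin_RInt_ring_near_pole with ab; auto.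
      * apply Rle_trans with (16 * s * M); [| nra].
        apply abs_sin_RInt_ring_off_pole with ab pb; auto. lra.
    + rewrite (RInt_eq0 (h a) 0 (2 * PI)) by (intros ph _; apply Hout; [auto | lra]).
      rewrite Rmult_0_r, Rabs_R0. apply Rmult_le_pos; [|lra]. apply Rmult_le_pos; lra.
  - intros a Ha Hd. rewrite (RInt_eq0 (h a) 0 (2 * PI)) by (intros ph _; apply Hout; auto). ring.
Qed.

Lemma dot_le_norm b1 b2 b3 a ph :
  b1 * (sin a * cos ph) + b2 * (sin a * sin ph) + b3 * cos a <= sqrt (b1 ^ 2 + b2 ^ 2 + b3 ^ 2).
Proof.
  set (d := b1 * (sin a * cos ph) + b2 * (sin a * sin ph) + b3 * cos a).
  assert (H := cauchy_schwarz3 b1 b2 b3 (sin a * cos ph) (sin a * sin ph) (cos a)).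
  rewrite unit_dir_sqr, Rmult_1_r in H.
  assert (Hs : 0 <= b1 ^ 2 + b2 ^ 2 + b3 ^ 2) by nra.
  assert (Rabs d <= sqrt (b1 ^ 2 + b2 ^ 2 + b3 ^ 2)).
  { apply Rabs_le_sqr; [apply sqrt_pos | rewrite pow2_sqrt by exact Hs; exact H]. }
  assert (h1 := Rle_abs d). lra.
Qed.

Lemma cap_of_sublevel al b1 b2 b3 lam ab pb C a ph :
  0 < lam -> b1 = lam * (sin ab * cos pb) -> b2 = lam * (sin ab * sin pb) -> b3 = lam * cos ab ->
  al - (b1 * (sin a * cos ph) + b2 * (sin a * sin ph) + b3 * cos a) <= C ->
  (1 - cos (a - ab)) + sin a * sin ab * (1 - cos (ph - pb)) <= (lam - al + C) / lam.
Proof.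
  intros Hlam -> -> -> H. rewrite <- one_sub_dot_polar. apply Rle_div_r; [lra|]. nra.
Qed.

(* [(lam - al + C) / lam] bounds 1 - cos of the angular radius of the cap
   {n | al - lam (u.n) <= C} around the unit vector u (see [cap_of_sublevel]). *)
Lemma cap_width_le al lam C c :
  0 < al -> 1 <= C -> 0 <= lam -> c ^ 2 <= al ^ 2 - lam ^ 2 -> 4 * C ^ 2 <= c ^ 2 -> al - lam <= C ->
  0 < lam /\ 0 <= (lam - al + C) / lam /\ (lam - al + C) / lam <= 8 * C ^ 2 / (3 * c ^ 2).
Proof.
  intros Hal HC Hlam0 Hc HCc Hnear.
  assert (Hc2 : 0 < c ^ 2) by nra.
  assert (Hlal : lam < al) by nra.
  assert (HC1 : c ^ 2 <= C * (al + lam)).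
  { assert (c ^ 2 <= (al - lam) * (al + lam)) by nra.
    assert ((al - lam) * (al + lam) <= C * (al + lam)) by (apply Rmult_le_compat_r; lra). lra. }
  assert (Hlamlb : 3 * c ^ 2 <= 8 * C * lam).
  { assert (C * (al + lam) <= C * (2 * lam + C)) by (apply Rmult_le_compat_l; lra). nra. }
  assert (Hlam : 0 < lam) by nra.
  split; [exact Hlam | split].
  - apply Rmult_le_pos; [lra | left; apply Rinv_0_lt_compat; lra].
  - apply Rdiv_le_cross; [lra | lra |]. assert (0 <= C) by lra. nra.
Qed.

Lemma abs_RInt_sublevel_le (h : R -> R -> R) (al b1 b2 b3 C c M : R) :
  0 < al -> 1 <= C -> c ^ 2 <= al ^ 2 - (b1 ^ 2 + b2 ^ 2 + b3 ^ 2) -> 4 * C ^ 2 <= c ^ 2 ->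
  (forall a ph, Rabs (h a ph) <= M) ->
  (forall a ph, C < al - (b1 * (sin a * cos ph) + b2 * (sin a * sin ph) + b3 * cos a) -> h a ph = 0) ->
  (forall a ph, joint_continuous h a ph) ->
  (forall a ph, h a (ph + 2 * PI) = h a ph) ->
  Rabs (RInt (fun a => sin a * RInt (h a) 0 (2 * PI)) 0 PI) <= 3000 * M * C ^ 2 / c ^ 2.
Proof.
  intros Hal HC Hc HCc Hb Hz HJ Hper.
  assert (HM : 0 <= M) by (specialize (Hb 0 0); assert (h0 := Rabs_pos (h 0 0)); lra).
  assert (Hc2 : 0 < c ^ 2) by nra.
  assert (Hbound0 : 0 <= 3000 * M * C ^ 2 / c ^ 2).
  { apply Rmult_le_pos; [| left; apply Rinv_0_lt_compat; lra]. nra. }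
  assert (Hs : 0 <= b1 ^ 2 + b2 ^ 2 + b3 ^ 2) by nra.
  set (lam := sqrt (b1 ^ 2 + b2 ^ 2 + b3 ^ 2)).
  assert (Hlam0 : 0 <= lam) by apply sqrt_pos.
  assert (Hlam2 : lam ^ 2 = b1 ^ 2 + b2 ^ 2 + b3 ^ 2) by (apply pow2_sqrt; exact Hs).
  destruct (Rlt_dec C (al - lam)) as [Hfar | Hnear].
  - rewrite (RInt_eq0 _ 0 PI); [rewrite Rabs_R0; exact Hbound0|].
    intros a _. rewrite (RInt_eq0 (h a) 0 (2 * PI)); [ring|].
    intros ph _. apply Hz. assert (h1 := dot_le_norm b1 b2 b3 a ph). fold lam in h1. lra.
  - apply Rnot_lt_le in Hnear.
    destruct (cap_width_le al lam C c) as [Hlam [Heta0 Heta1]]; auto; [rewrite Hlam2; exact Hc |].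
    destruct (unit_vector_polar (b1 / lam) (b2 / lam) (b3 / lam)) as [ab [pb [Hab [E1 [E2 E3]]]]].
    { replace ((b1 / lam) ^ 2 + (b2 / lam) ^ 2 + (b3 / lam) ^ 2)
        with ((b1 ^ 2 + b2 ^ 2 + b3 ^ 2) / lam ^ 2) by (field; lra).
      rewrite <- Hlam2. field. lra. }
    apply Rle_trans with (1000 * ((lam - al + C) / lam) * M).
    + apply abs_RInt_cap_le with ab pb; auto.
      intros a ph Hn. apply cap_of_sublevel with b1 b2 b3; auto.
      * rewrite <- E1. field. lra.
      * rewrite <- E2. field. lra.
      * rewrite <- E3. field. lra.
      * apply Rnot_lt_le. intros Hlt. apply Hn, Hz, Hlt.
    + replace (3000 * M * C ^ 2 / c ^ 2) with (1000 * (3 * C ^ 2 / c ^ 2) * M)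
        by (field; intro Z; rewrite Z in Hc2; lra).
      apply Rmult_le_compat_r; [exact HM|]. apply Rmult_le_compat_l; [lra|].
      apply Rle_trans with (8 * C ^ 2 / (3 * c ^ 2)); [exact Heta1|].
      apply Rdiv_le_cross; [nra | lra |]. nra.
Qed.

(** * Distance to the centre of the supports *)

(* [hdist x0 y = arcosh (cosh_dist x0 y)]. *)
Definition cosh_dist (x0 y : pt) := 1 + edist2 x0 y / (2 * pz x0 * pz y).

(* In the hyperboloid model cosh d(x0, y) = -<X0, Y> and Y = cosh r X + sinh r N for the unit
   tangent vector N at X in direction n; hence cosh d(x0, geo_pt x r a ph) = alpha - b.n(a, ph)
   with the coefficients below. *)
Definition cd_m (x0 x : pt) := (px x0 - px x) ^ 2 + (py x0 - py x) ^ 2 + pz x0 ^ 2.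
Definition cd_alpha (x0 x : pt) r := (cd_m x0 x + pz x ^ 2) * cosh r / (2 * pz x0 * pz x).
Definition cd_b1 (x0 x : pt) r := sinh r * (px x0 - px x) / pz x0.
Definition cd_b2 (x0 x : pt) r := sinh r * (py x0 - py x) / pz x0.
Definition cd_b3 (x0 x : pt) r := sinh r * (cd_m x0 x - pz x ^ 2) / (2 * pz x0 * pz x).

Lemma cosh_dist_geo_pt x0 x r a ph : inH3 x0 -> inH3 x ->
  cosh_dist x0 (geo_pt x r a ph) = cd_alpha x0 x r
    - (cd_b1 x0 x r * (sin a * cos ph) + cd_b2 x0 x r * (sin a * sin ph) + cd_b3 x0 x r * cos a).
Proof.
  intros H0 Hx. unfold cosh_dist, edist2, geo_pt. cbn [px py pz fst snd].
  assert (HY := geo_height_pos x r a Hx).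
  set (Y := geo_height x r a) in *.
  set (K := Y * sinh r * sin a).
  assert (Hph := sin2_cos2 ph). assert (Ha := sin2_cos2 a). unfold Rsqr in Hph, Ha.
  assert (E1 : (px x0 - (px x + K * cos ph)) ^ 2 + (py x0 - (py x + K * sin ph)) ^ 2
     = (px x0 - px x) ^ 2 + (py x0 - py x) ^ 2
       - 2 * K * ((px x0 - px x) * cos ph + (py x0 - py x) * sin ph) + K ^ 2).
  { replace ((px x0 - (px x + K * cos ph)) ^ 2 + (py x0 - (py x + K * sin ph)) ^ 2)
      with ((px x0 - px x) ^ 2 + (py x0 - py x) ^ 2
            - 2 * K * ((px x0 - px x) * cos ph + (py x0 - py x) * sin ph)
            + K ^ 2 * (sin ph * sin ph + cos ph * cos ph)) by ring.
    rewrite Hph. ring. }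
  rewrite E1.
  assert (E2 : K ^ 2 = Y ^ 2 * sinh r ^ 2 * (1 - cos a ^ 2)).
  { unfold K. replace (1 - cos a ^ 2) with (sin a * sin a) by lra. ring. }
  rewrite E2. unfold K. unfold Y, geo_height, cd_alpha, cd_b1, cd_b2, cd_b3, cd_m.
  unfold inH3 in H0, Hx.
  assert (Hp := cosh_sub_sinh_cos_pos r a).
  exp_field r a.
Qed.

Lemma cd_alpha_pos x0 x r : inH3 x0 -> inH3 x -> 0 < cd_alpha x0 x r.
Proof.
  intros H0 Hx. unfold cd_alpha, cd_m, inH3 in *. assert (h := cosh_pos r).
  assert (h1 := pow2_ge_0 (px x0 - px x)). assert (h2 := pow2_ge_0 (py x0 - py x)).
  assert (0 < pz x0 ^ 2) by nra.  assert (0 < pz x ^ 2) by nra.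
  apply Rdiv_lt_0_compat; [| nra]. apply Rmult_lt_0_compat; [|lra]. lra.
Qed.

Lemma cd_alpha_sqr_sub_b_sqr_ge x0 x r : inH3 x0 -> inH3 x ->
  cosh r ^ 2 <= cd_alpha x0 x r ^ 2 - (cd_b1 x0 x r ^ 2 + cd_b2 x0 x r ^ 2 + cd_b3 x0 x r ^ 2).
Proof.
  intros H0 Hx. unfold inH3 in *.
  assert (Eq : cd_alpha x0 x r ^ 2 - (cd_b1 x0 x r ^ 2 + cd_b2 x0 x r ^ 2 + cd_b3 x0 x r ^ 2)
     = (cd_m x0 x + pz x ^ 2) ^ 2 / (4 * pz x0 ^ 2 * pz x ^ 2) + sinh r ^ 2).
  { unfold cd_alpha, cd_b1, cd_b2, cd_b3, cd_m. unfold cosh, sinh. rewrite !exp_Ropp.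
    assert (He : 0 < exp r) by apply exp_pos. set (e := exp r) in *.
    field. repeat split; intro; lra. }
  rewrite Eq. assert (Hcs := cosh_sqr_sub_sinh_sqr r).
  assert (1 <= (cd_m x0 x + pz x ^ 2) ^ 2 / (4 * pz x0 ^ 2 * pz x ^ 2)).
  { assert (Hm : 2 * pz x0 * pz x <= cd_m x0 x + pz x ^ 2).
    { unfold cd_m. assert (0 <= (pz x0 - pz x)^2) by apply pow2_ge_0.
      assert (0 <= (px x0 - px x) ^ 2) by apply pow2_ge_0.
      assert (0 <= (py x0 - py x) ^ 2) by apply pow2_ge_0. nra. }
    assert (Hd : 0 < 4 * pz x0 ^ 2 * pz x ^ 2) by (apply Rmult_lt_0_compat; [nra| nra]).
    apply Rle_div_r; auto. rewrite Rmult_1_l.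
    assert (0 <= 2 * pz x0 * pz x) by nra.
    replace (4 * pz x0 ^ 2 * pz x ^ 2) with ((2 * pz x0 * pz x) ^ 2) by ring.
    apply pow_incr. lra. }
  lra.
Qed.

Lemma cosh_dist_ge1 x0 y : inH3 x0 -> inH3 y -> 1 <= cosh_dist x0 y.
Proof.
  intros H0 Hy. unfold cosh_dist, inH3 in *. assert (0 <= edist2 x0 y).
  { unfold edist2. assert (h1 := pow2_ge_0 (px x0 - px y)). assert (h2 := pow2_ge_0 (py x0 - py y)).
    assert (h3 := pow2_ge_0 (pz x0 - pz y)). lra. }
  assert (0 <= edist2 x0 y / (2 * pz x0 * pz y))
    by (apply Rmult_le_pos; [lra | left; apply Rinv_0_lt_compat; nra]).
  lra.
Qed.

Lemma cosh_dist_le_cosh x0 y R : inH3 x0 -> inH3 y -> hdist x0 y <= R -> cosh_dist x0 y <= cosh R.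
Proof.
  intros H0 Hy Hd. assert (Hu := cosh_dist_ge1 x0 y H0 Hy).
  unfold hdist in Hd. fold (cosh_dist x0 y) in Hd.
  set (u := cosh_dist x0 y) in *.
  set (q := sqrt (u * u - 1)).
  assert (Hq : q * q = u * u - 1) by (apply sqrt_sqrt; nra).
  assert (Hq0 : 0 <= q) by apply sqrt_pos.
  set (w := u + q).
  assert (Hw1 : 1 <= w) by (unfold w; lra).
  assert (HwR : w <= exp R).
  { rewrite <- (exp_ln w) by lra. apply exp_le_compat. exact Hd. }
  assert (Hinv : (u - q) * w = 1) by (unfold w; nra).
  assert (Hu2 : u = (w + / w) / 2).
  { assert (u - q = / w) by (apply Rmult_eq_reg_r with w; [rewrite Rinv_l; lra| lra]). unfold w in *. lra. }
  rewrite Hu2. unfold cosh.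
  rewrite exp_Ropp. set (E := exp R) in *.
  assert (HE : 0 < E) by (unfold E; apply exp_pos).
  assert (Hk : (E - w) * (w * E - 1) >= 0) by (apply Rle_ge; apply Rmult_le_pos; nra).
  apply Rmult_le_reg_r with (2 * w * E); [nra|].
  replace ((w + / w) / 2 * (2 * w * E)) with (w * w * E + E) by (field; repeat split; intro; nra).
  replace ((E + / E) / 2 * (2 * w * E)) with (E * E * w + w) by (field; repeat split; intro; nra).
  nra.
Qed.

Lemma cosh_dist_le_in_box x0 y C : inH3 x0 -> inH3 y -> 1 <= C -> cosh_dist x0 y <= C ->
  in_box (px x0 - 2 * pz x0 * C, py x0 - 2 * pz x0 * C, pz x0 / (2 * C))
         (px x0 + 2 * pz x0 * C, py x0 + 2 * pz x0 * C, 2 * pz x0 * C) y.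
Proof.
  intros H0 Hy HC Hu. unfold cosh_dist, inH3 in *.
  assert (Hd : edist2 x0 y <= 2 * pz x0 * pz y * (C - 1)).
  { assert (Hp : 0 < 2 * pz x0 * pz y) by nra.
    assert (edist2 x0 y / (2 * pz x0 * pz y) <= C - 1) by lra.
    apply Rmult_le_reg_r with (/ (2 * pz x0 * pz y)); [apply Rinv_0_lt_compat; lra|].
    replace (2 * pz x0 * pz y * (C - 1) * / (2 * pz x0 * pz y)) with (C - 1)
      by (field; repeat split; intro; nra).
    exact H. }
  unfold edist2 in Hd.
  assert (h1 := pow2_ge_0 (px x0 - px y)). assert (h2 := pow2_ge_0 (py x0 - py y)).
  assert (h3 := pow2_ge_0 (pz x0 - pz y)).
  assert (Hz1 : pz y <= 2 * pz x0 * C) by nra.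
  assert (Hz2 : pz x0 <= 2 * pz y * C) by nra.
  assert (Hh : forall t, t ^ 2 <= 2 * pz x0 * pz y * (C - 1) -> Rabs t <= 2 * pz x0 * C).
  { intros t Ht. apply Rabs_le_sqr; [nra|].
    assert (2 * pz x0 * pz y * (C - 1) <= (2 * pz x0 * C) ^ 2) by nra. lra. }
  assert (X1 := Hh (px x0 - px y) ltac:(lra)). assert (X2 := Hh (py x0 - py y) ltac:(lra)).
  apply Rabs_le_between in X1. apply Rabs_le_between in X2.
  unfold in_box, px, py, pz in *; simpl in *.
  repeat split; try lra.
  apply Rmult_le_reg_r with (2 * C); [lra|]. unfold Rdiv. rewrite Rmult_assoc, Rinv_l by lra. lra.
Qed.

Lemma supp_in_ball_cosh_dist f x0 R y :
  inH3 x0 -> inH3 y -> supp_in_ball f x0 R -> cosh R < cosh_dist x0 y -> f y = 0.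
Proof.
  intros H0 Hy Hs Hu. apply Hs; auto. apply Rnot_le_lt. intro Hd.
  assert (h := cosh_dist_le_cosh x0 y R H0 Hy Hd). lra.
Qed.

Lemma radial_deriv_supp f d1 d2 d3 x0 x r a ph R :
  has_partials f d1 d2 d3 -> cube_cont d1 -> cube_cont d2 -> cube_cont d3 ->
  inH3 x0 -> inH3 x -> supp_in_ball f x0 R -> cosh R < cosh_dist x0 (geo_pt x r a ph) ->
  radial_deriv d1 d2 d3 x r a ph = 0.
Proof.
  intros Hp H1 H2 H3 H0 Hx Hs Hu.
  assert (Hd := is_derive_geo_pt_comp f d1 d2 d3 x Hp H1 H2 H3 Hx r a ph).
  assert (Hc : continuous (fun t => cosh_dist x0 (geo_pt x t a ph) - cosh R) r).
  { assert (Hc' : continuous (fun t => cd_alpha x0 x t - (cd_b1 x0 x t * (sin a * cos ph)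
                  + cd_b2 x0 x t * (sin a * sin ph) + cd_b3 x0 x t * cos a) - cosh R) r).
    { unfold cd_alpha, cd_b1, cd_b2, cd_b3, cd_m. unfold inH3 in *. cont; intro Z; nra. }
    revert Hc'. apply continuous_ext. intros t. rewrite cosh_dist_geo_pt; auto. }
  assert (Hl := continuous_locally_pos _ r Hc). cbv beta in Hl. specialize (Hl ltac:(lra)).
  assert (H0d : is_derive (fun t => f (geo_pt x t a ph)) r 0).
  { apply (is_derive_ext_loc (fun _ => 0)).
    - revert Hl. apply filter_imp. intros t Ht. symmetry. apply (supp_in_ball_cosh_dist f x0 R); auto.
      + unfold inH3, geo_pt, pz; simpl. apply geo_height_pos; auto.
      + lra.
    - apply (is_derive_const (K := R_AbsRing) (V := R_NormedModule)). }
  apply is_derive_unique in Hd. apply is_derive_unique in H0d. rewrite <- Hd, H0d. reflexivity.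
Qed.

(** * Decay *)

Lemma bounded_near_ball d x0 R : cube_cont d -> inH3 x0 ->
  exists M, 0 <= M /\ forall y, inH3 y -> cosh_dist x0 y <= cosh R -> Rabs (d y) <= M.
Proof.
  intros Hd H0. set (C := cosh R). assert (HC := cosh_ge1 R). fold C in HC.
  assert (Hlo : 0 < pz x0 / (2 * C)) by (apply Rdiv_lt_0_compat; [exact H0 | lra]).
  destruct (bounded_on_box d (px x0 - 2 * pz x0 * C, py x0 - 2 * pz x0 * C, pz x0 / (2 * C))
                             (px x0 + 2 * pz x0 * C, py x0 + 2 * pz x0 * C, 2 * pz x0 * C))
    as [M0 HM0]; [exact Hlo | |].
  { intros p [_ [_ [Hz _]]]. apply Hd. unfold inH3. simpl in Hz. lra. }
  exists (Rabs M0). split; [apply Rabs_pos|]. intros y Hy Hu.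
  assert (h := HM0 y (cosh_dist_le_in_box x0 y C H0 Hy HC Hu)). assert (h' := Rle_abs M0). lra.
Qed.

Lemma supp_in_ball_bounded f x0 R : cube_cont f -> inH3 x0 -> supp_in_ball f x0 R ->
  exists M, 0 <= M /\ forall y, inH3 y -> Rabs (f y) <= M.
Proof.
  intros Hf H0 Hs. destruct (bounded_near_ball f x0 R Hf H0) as [M [HM0 HM]].
  exists M. split; [exact HM0|]. intros y Hy.
  destruct (Rle_dec (cosh_dist x0 y) (cosh R)) as [Hu | Hu]; [auto|].
  rewrite (supp_in_ball_cosh_dist f x0 R y H0 Hy Hs) by lra. rewrite Rabs_R0. exact HM0.
Qed.

Lemma radial_deriv_bounded f d1 d2 d3 x0 R :
  has_partials f d1 d2 d3 -> cube_cont d1 -> cube_cont d2 -> cube_cont d3 ->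
  inH3 x0 -> supp_in_ball f x0 R ->
  exists M, 0 <= M /\ forall x r a ph, inH3 x -> Rabs (radial_deriv d1 d2 d3 x r a ph) <= M.
Proof.
  intros Hp Hd1 Hd2 Hd3 H0 Hs. set (C := cosh R). assert (HC := cosh_ge1 R). fold C in HC.
  destruct (bounded_near_ball d1 x0 R Hd1 H0) as [M1 [HM10 HM1]].
  destruct (bounded_near_ball d2 x0 R Hd2 H0) as [M2 [HM20 HM2]].
  destruct (bounded_near_ball d3 x0 R Hd3 H0) as [M3 [HM30 HM3]].
  assert (Hz0 : 0 < pz x0) by exact H0.
  exists (3 * (M1 + M2 + M3) * (2 * pz x0 * C)). split; [apply Rmult_le_pos; nra|].
  intros x r a ph Hx.
  assert (HE : inH3 (geo_pt x r a ph)) by (apply geo_height_pos; exact Hx).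
  destruct (Rle_dec (cosh_dist x0 (geo_pt x r a ph)) C) as [Hu | Hu].
  - destruct (cosh_dist_le_in_box x0 _ C H0 HE HC Hu) as [_ [_ [_ HY]]].
    apply radial_deriv_bound; [exact Hx | | | | exact HY].
    + assert (h := HM1 _ HE Hu). lra.
    + assert (h := HM2 _ HE Hu). lra.
    + assert (h := HM3 _ HE Hu). lra.
  - rewrite (radial_deriv_supp f d1 d2 d3 x0 x r a ph R) by (auto; unfold C in Hu; lra).
    rewrite Rabs_R0. apply Rmult_le_pos; nra.
Qed.

Lemma abs_RInt_geo_directions_le (h : R -> R -> R) x0 x r C M :
  inH3 x0 -> inH3 x -> 1 <= C -> 2 * C <= cosh r ->
  (forall a ph, Rabs (h a ph) <= M) ->
  (forall a ph, C < cosh_dist x0 (geo_pt x r a ph) -> h a ph = 0) ->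
  (forall a ph, joint_continuous h a ph) -> (forall a ph, h a (ph + 2 * PI) = h a ph) ->
  Rabs (RInt (fun a => sin a * RInt (h a) 0 (2 * PI)) 0 PI) <= 3000 * M * C ^ 2 / cosh r ^ 2.
Proof.
  intros H0 Hx HC Hc Hb Hz HJ Hper.
  apply (abs_RInt_sublevel_le h (cd_alpha x0 x r) (cd_b1 x0 x r) (cd_b2 x0 x r) (cd_b3 x0 x r));
    auto.
  - apply cd_alpha_pos; auto.
  - apply cd_alpha_sqr_sub_b_sqr_ge; auto.
  - nra.
  - intros a ph Ha. apply Hz. rewrite cosh_dist_geo_pt by auto. exact Ha.
Qed.

Lemma abs_polar_integral_le h x0 x r R M :
  cube_cont h -> inH3 x0 -> inH3 x -> supp_in_ball h x0 R -> (forall y, inH3 y -> Rabs (h y) <= M) ->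
  2 * cosh R <= cosh r ->
  Rabs (polar_integral h x r) <= 3000 * M * cosh R ^ 2 / cosh r ^ 2.
Proof.
  intros Hh H0 Hx Hs HM Hr.
  assert (HE : forall a ph, inH3 (geo_pt x r a ph)) by (intros; apply geo_height_pos; exact Hx).
  apply (abs_RInt_geo_directions_le (fun a ph => h (geo_pt x r a ph)) x0 x r (cosh R) M); auto.
  - apply cosh_ge1.
  - intros a ph Hu. apply (supp_in_ball_cosh_dist h x0 R); auto.
  - intros a ph. apply continuous_geo_pt; auto.
  - intros a ph. rewrite geo_pt_periodic. reflexivity.
Qed.

Lemma abs_polar_integral_deriv_le f d1 d2 d3 x0 x r R M :
  has_partials f d1 d2 d3 -> cube_cont d1 -> cube_cont d2 -> cube_cont d3 ->
  inH3 x0 -> inH3 x -> supp_in_ball f x0 R ->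
  (forall x r a ph, inH3 x -> Rabs (radial_deriv d1 d2 d3 x r a ph) <= M) ->
  2 * cosh R <= cosh r ->
  Rabs (polar_integral_deriv d1 d2 d3 x r) <= 3000 * M * cosh R ^ 2 / cosh r ^ 2.
Proof.
  intros Hp H1 H2 H3 H0 Hx Hs HM Hr.
  apply (abs_RInt_geo_directions_le (fun a ph => radial_deriv d1 d2 d3 x r a ph) x0 x r (cosh R) M);
    auto.
  - apply cosh_ge1.
  - intros a ph Hu. apply (radial_deriv_supp f d1 d2 d3 x0 x r a ph R); auto.
  - intros a ph. apply continuous_radial_deriv_a_ph; auto.
  - intros a ph. apply radial_deriv_periodic.
Qed.

Lemma sinh_spherical_mean_polar h x r : cube_cont h -> inH3 x ->
  sinh r * spherical_mean h r x = / (4 * PI) * (sinh r * polar_integral h x r).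
Proof.
  intros Hh Hx. unfold spherical_mean. rewrite sphere_integral_polar by auto.
  assert (hPI := PI_RGT_0).
  destruct (Req_dec (sinh r) 0) as [Z|Z].
  - rewrite Z. ring.
  - field. split; [intro; lra | exact Z].
Qed.

Lemma is_derive_shift (h : R -> R) t0 t l :
  is_derive h (t - t0) l -> is_derive (fun s => h (s - t0)) t l.
Proof.
  intros H. assert (Hl : is_derive (fun s => s - t0) t 1) by (auto_derive; auto; ring).
  assert (X := is_derive_comp h (fun s => s - t0) t l 1 H Hl).
  unfold scal in X; simpl in X; unfold mult in X; simpl in X. rewrite Rmult_1_l in X. exact X.
Qed.

Lemma is_derive_sinh_spherical_mean f d1 d2 d3 x tau0 tau :
  has_partials f d1 d2 d3 -> cube_cont d1 -> cube_cont d2 -> cube_cont d3 -> inH3 x ->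
  is_derive (fun s => sinh (s - tau0) * spherical_mean f (s - tau0) x) tau
    (/ (4 * PI) * (cosh (tau - tau0) * polar_integral f x (tau - tau0)
                   + sinh (tau - tau0) * polar_integral_deriv d1 d2 d3 x (tau - tau0))).
Proof.
  intros Hp H1 H2 H3 Hx.
  assert (Hf := partials_cube_cont f d1 d2 d3 Hp H1 H2 H3).
  apply (is_derive_ext (fun s => / (4 * PI) * (sinh (s - tau0) * polar_integral f x (s - tau0)))).
  { intros s. symmetry. apply sinh_spherical_mean_polar; auto. }
  apply (is_derive_scal (fun s => sinh (s - tau0) * polar_integral f x (s - tau0))).
  apply (is_derive_mult (fun s => sinh (s - tau0)) (fun s => polar_integral f x (s - tau0)));
    [| | intros; apply Rmult_comm].
  - apply (is_derive_shift sinh). apply is_derive_Reals, derivable_pt_lim_sinh.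
  - apply (is_derive_shift (polar_integral f x)). apply is_derive_polar_integral; auto.
Qed.

Lemma cosh_double_le R r : 0 <= R -> R + 2 <= r -> 2 * cosh R <= cosh r.
Proof.
  intros HR Hr. assert (h1 := cosh_le_exp R HR). assert (h2 := half_exp_le_cosh r).
  assert (h3 : exp (R + 2) <= exp r) by (apply exp_le_compat; lra).
  rewrite exp_plus in h3. assert (h4 := exp2_ge4). assert (0 < exp R) by apply exp_pos. nra.
Qed.

Lemma inv_cosh_le r : / cosh r <= 2 * exp (- r).
Proof.
  assert (h := half_exp_le_cosh r). assert (0 < exp r) by apply exp_pos.
  rewrite exp_Ropp. replace (2 * / exp r) with (/ (exp r / 2)) by (field; lra).
  apply Rinv_le_contravar; lra.
Qed.

Lemma abs_lin_comb_le c s F D G a b d : 0 < c -> 0 <= s <= c ->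
  Rabs F <= a / c ^ 2 -> Rabs D <= b / c ^ 2 -> Rabs G <= d / c ^ 2 ->
  Rabs (c * F + s * D + s * G) <= (a + b + d) / c.
Proof.
  intros Hc Hs HF HD HG.
  eapply Rle_trans; [apply Rabs_triang|].
  eapply Rle_trans; [apply Rplus_le_compat_r; apply Rabs_triang|].
  rewrite !Rabs_mult, (Rabs_right c), (Rabs_right s) by lra.
  assert (X1 : c * Rabs F <= c * (a / c ^ 2)) by (apply Rmult_le_compat_l; lra).
  assert (X2 : s * Rabs D <= c * (b / c ^ 2)) by (apply Rmult_le_compat; try lra; apply Rabs_pos).
  assert (X3 : s * Rabs G <= c * (d / c ^ 2)) by (apply Rmult_le_compat; try lra; apply Rabs_pos).
  replace ((a + b + d) / c) with (c * (a / c ^ 2) + c * (b / c ^ 2) + c * (d / c ^ 2)) by (field; lra).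
  lra.
Qed.

Lemma abs_wave_le f g d1 d2 d3 x0 x R Mf Mg MD tau0 tau :
  has_partials f d1 d2 d3 -> cube_cont d1 -> cube_cont d2 -> cube_cont d3 -> cube_cont g ->
  inH3 x0 -> inH3 x -> 0 <= R -> supp_in_ball f x0 R -> supp_in_ball g x0 R ->
  (forall y, inH3 y -> Rabs (f y) <= Mf) -> (forall y, inH3 y -> Rabs (g y) <= Mg) ->
  (forall x r a ph, inH3 x -> Rabs (radial_deriv d1 d2 d3 x r a ph) <= MD) ->
  R + 2 <= tau - tau0 ->
  Rabs (/ (4 * PI) * (cosh (tau - tau0) * polar_integral f x (tau - tau0)
                      + sinh (tau - tau0) * polar_integral_deriv d1 d2 d3 x (tau - tau0))
        + sinh (tau - tau0) * spherical_mean g (tau - tau0) x)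
  <= / (4 * PI) * (3000 * (Mf + MD + Mg) * cosh R ^ 2) * 2 * exp tau0 * exp (- tau).
Proof.
  intros Hp Hd1 Hd2 Hd3 Hgc H0 Hx HR Hsf Hsg HMf HMg HMD Hr.
  assert (hPI := PI_RGT_0). assert (Hip : 0 < / (4 * PI)) by (apply Rinv_0_lt_compat; lra).
  assert (Hfc := partials_cube_cont f d1 d2 d3 Hp Hd1 Hd2 Hd3).
  set (r := tau - tau0) in *.
  assert (Hs0 : 0 < sinh r) by (apply sinh_pos; lra).
  assert (Hsc := sinh_lt_cosh r).
  assert (Hc2C : 2 * cosh R <= cosh r) by (apply cosh_double_le; lra).
  assert (BF := abs_polar_integral_le f x0 x r R Mf Hfc H0 Hx Hsf HMf Hc2C).
  assert (BG := abs_polar_integral_le g x0 x r R Mg Hgc H0 Hx Hsg HMg Hc2C).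
  assert (BD := abs_polar_integral_deriv_le f d1 d2 d3 x0 x r R MD Hp Hd1 Hd2 Hd3 H0 Hx Hsf HMD Hc2C).
  assert (HM0 : 0 <= Mf + MD + Mg).
  { specialize (HMf x Hx). specialize (HMg x Hx). specialize (HMD x 0 0 0 Hx).
    assert (h1 := Rabs_pos (f x)). assert (h2 := Rabs_pos (g x)).
    assert (h3 := Rabs_pos (radial_deriv d1 d2 d3 x 0 0 0)). lra. }
  set (B := 3000 * (Mf + MD + Mg) * cosh R ^ 2).
  assert (HB0 : 0 <= B) by (unfold B; nra).
  rewrite (sinh_spherical_mean_polar g x r Hgc Hx).
  replace (/ (4 * PI) * (cosh r * polar_integral f x r + sinh r * polar_integral_deriv d1 d2 d3 x r)
           + / (4 * PI) * (sinh r * polar_integral g x r))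
    with (/ (4 * PI) * (cosh r * polar_integral f x r + sinh r * polar_integral_deriv d1 d2 d3 x r
                        + sinh r * polar_integral g x r)) by ring.
  rewrite Rabs_mult, (Rabs_right (/ (4 * PI))) by lra.
  assert (Hsum := abs_lin_comb_le (cosh r) (sinh r) _ _ _ _ _ _ ltac:(lra) ltac:(lra) BF BD BG).
  replace (3000 * Mf * cosh R ^ 2 + 3000 * MD * cosh R ^ 2 + 3000 * Mg * cosh R ^ 2) with B in Hsum
    by (unfold B; ring).
  assert (HBc : B / cosh r <= B * (2 * exp (- r))).
  { apply Rmult_le_compat_l; [exact HB0 | apply inv_cosh_le]. }
  assert (Her : exp (- r) = exp tau0 * exp (- tau)) by (unfold r; rewrite <- exp_plus; f_equal; ring).
  rewrite Her in HBc.
  replace (/ (4 * PI) * B * 2 * exp tau0 * exp (- tau))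
    with (/ (4 * PI) * (B * (2 * (exp tau0 * exp (- tau))))) by ring.
  apply Rmult_le_compat_l; lra.
Qed.

Lemma decay_single (f g : pt -> R) (x0 : pt) (R tau0 : R) :
  0 < tau0 -> 0 < R -> inH3 x0 -> C2_H3 f -> C1_H3 g ->
  supp_in_ball f x0 R -> supp_in_ball g x0 R ->
  exists K T, 0 < K /\ 0 < T /\ forall tau x, T <= tau -> tau0 < tau -> inH3 x ->
    exists l, derivable_pt_lim (fun s => sinh (s - tau0) * spherical_mean f (s - tau0) x) tau l /\
      Rabs (l + sinh (tau - tau0) * spherical_mean g (tau - tau0) x) <= K * exp (- tau).
Proof.
  intros Ht0 HR H0 [d1 [d2 [d3 [Hp [Hd1 [Hd2 Hd3]]]]]] Hg Hsf Hsg.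
  apply C1_H3_cube_cont in Hd1. apply C1_H3_cube_cont in Hd2. apply C1_H3_cube_cont in Hd3.
  assert (Hfc := partials_cube_cont f d1 d2 d3 Hp Hd1 Hd2 Hd3).
  assert (Hgc := C1_H3_cube_cont g Hg).
  destruct (supp_in_ball_bounded f x0 R Hfc H0 Hsf) as [Mf [HMf0 HMf]].
  destruct (supp_in_ball_bounded g x0 R Hgc H0 Hsg) as [Mg [HMg0 HMg]].
  destruct (radial_deriv_bounded f d1 d2 d3 x0 R Hp Hd1 Hd2 Hd3 H0 Hsf) as [MD [HMD0 HMD]].
  set (K := / (4 * PI) * (3000 * (Mf + MD + Mg) * cosh R ^ 2) * 2 * exp tau0).
  assert (HK : 0 <= K).
  { assert (hPI := PI_RGT_0). assert (0 < exp tau0) by apply exp_pos.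
    assert (0 < / (4 * PI)) by (apply Rinv_0_lt_compat; lra).
    assert (0 <= 3000 * (Mf + MD + Mg) * cosh R ^ 2) by (apply Rmult_le_pos; [lra | apply pow2_ge_0]).
    unfold K. apply Rmult_le_pos; [apply Rmult_le_pos; [apply Rmult_le_pos |] |]; lra. }
  exists (K + 1), (tau0 + R + 2). split; [lra | split; [lra|]].
  intros tau x HT Htau Hx.
  exists (/ (4 * PI) * (cosh (tau - tau0) * polar_integral f x (tau - tau0)
                        + sinh (tau - tau0) * polar_integral_deriv d1 d2 d3 x (tau - tau0))).
  split.
  - apply is_derive_Reals, is_derive_sinh_spherical_mean; auto.
  - eapply Rle_trans; [apply (abs_wave_le f g d1 d2 d3 x0 x R Mf Mg MD); auto; lra|].
    assert (0 < exp (- tau)) by apply exp_pos. fold K. nra.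
Qed.

Theorem theorem4p1 (tau0 Rad : R) (x0 : pt) (f g : nat -> pt -> R) :
  0 < tau0 -> 0 < Rad -> inH3 x0 ->
  (forall mu : nat, (1 <= mu <= 3)%nat ->
     C2_H3 (f mu) /\ C1_H3 (g mu) /\
     supp_in_ball (f mu) x0 Rad /\ supp_in_ball (g mu) x0 Rad) ->
  exists C T : R, 0 < C /\ 0 < T /\
    forall mu : nat, (1 <= mu <= 3)%nat ->
    forall (tau : R) (x : pt), T <= tau -> tau0 < tau -> inH3 x ->
      exists l : R,
        derivable_pt_lim (fun s => sinh (s - tau0) * spherical_mean (f mu) (s - tau0) x) tau l /\
        Rabs (l + sinh (tau - tau0) * spherical_mean (g mu) (tau - tau0) x) <= C * exp (- tau).
Proof.
  intros Ht0 HR H0 Hfg.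
  assert (Hdecay : forall mu, (1 <= mu <= 3)%nat -> exists K T, 0 < K /\ 0 < T /\
    forall tau x, T <= tau -> tau0 < tau -> inH3 x ->
      exists l,
        derivable_pt_lim (fun s => sinh (s - tau0) * spherical_mean (f mu) (s - tau0) x) tau l /\
        Rabs (l + sinh (tau - tau0) * spherical_mean (g mu) (tau - tau0) x) <= K * exp (- tau)).
  { intros mu Hmu. destruct (Hfg mu Hmu) as [Hf [Hg [Hsf Hsg]]].
    apply (decay_single (f mu) (g mu) x0 Rad tau0); auto. }
  destruct (Hdecay 1%nat ltac:(lia)) as [K1 [T1 [HK1 [HT1 P1]]]].
  destruct (Hdecay 2%nat ltac:(lia)) as [K2 [T2 [HK2 [HT2 P2]]]].
  destruct (Hdecay 3%nat ltac:(lia)) as [K3 [T3 [HK3 [HT3 P3]]]].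
  assert (M1 := Rmax_l T1 (Rmax T2 T3)). assert (M23 := Rmax_r T1 (Rmax T2 T3)).
  assert (M2 := Rmax_l T2 T3). assert (M3 := Rmax_r T2 T3).
  exists (K1 + K2 + K3), (Rmax T1 (Rmax T2 T3)). split; [lra | split; [lra|]].
  intros mu Hmu tau x HT Htau Hx.
  assert (He : 0 < exp (- tau)) by apply exp_pos.
  assert (Hcases : mu = 1%nat \/ mu = 2%nat \/ mu = 3%nat) by lia.
  destruct Hcases as [E|[E|E]]; subst mu.
  - destruct (P1 tau x ltac:(lra) Htau Hx) as [l [Hl Hb]]. exists l. split; [exact Hl | nra].
  - destruct (P2 tau x ltac:(lra) Htau Hx) as [l [Hl Hb]]. exists l. split; [exact Hl | nra].
  - destruct (P3 tau x ltac:(lra) Htau Hx) as [l [Hl Hb]]. exists l. split; [exact Hl | nra].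
Qed.
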